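(* Let $U$ be the set of pairs $(p,q)\in\mathbb D^2\times\mathbb D^2$ with $p=(p_1,p_2)$, $q=(q_1,q_2)$ satisfying $|p_2|<|p_1|$, $|q_2|<|q_1|$ and $m\!\left(p_2/p_1,\,q_2/q_1\right)<m(p_1,q_1)$, and let $\sigma(p,q):=((p_2,p_1),(q_2,q_1))$. Then for every $(p,q)\in U\cup\sigma(U)$ with $p\ne q$ we have $c(p,q)=l(p,q)$; more precisely, for $(p,q)\in U$ both equal $\log|p_1q_1|$.
   Context: $\mathbb D$ is the open unit disc; $m(\lambda_1,\lambda_2):=\left|\frac{\lambda_1-\lambda_2}{1-\bar\lambda_1\lambda_2}\right|$ is the Möbius distance on $\mathbb D$. For distinct $p,q\in\mathbb D^2$, $c(p,q):=c_{\mathbb D^2}((0,0);p,q)$ and $l(p,q):=l_{\mathbb D^2}((0,0);p,q)$, where for a domain $D$, $z\in D$ and distinct poles $p_1,\dots,p_N\in D$: $l_D(z;p_1,\dots,p_N)$ is the infimum of $\sum_j\log|\lambda_j|$ over holomorphic $\psi:\mathbb D\to D$ and $\lambda_j\in\mathbb D$ with $\psi(0)=z$, $\psi(\lambda_j)=p_j$; and $c_D(z;p_1,\dots,p_N)=\sup\{\log|F(z)|: F:D\to\mathbb D\text{ holomorphic}, F(p_j)=0\ \forall j\}$. *)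

From Stdlib Require Import Reals Lra.
Open Scope R_scope.

Definition Cplx : Type := (R * R)%type.
Definition Cre (z : Cplx) : R := fst z.
Definition Cim (z : Cplx) : R := snd z.
Definition C0 : Cplx := (0, 0).
Definition C1 : Cplx := (1, 0).
Definition Cadd (z w : Cplx) : Cplx := (fst z + fst w, snd z + snd w).
Definition Copp (z : Cplx) : Cplx := (- fst z, - snd z).
Definition Csub (z w : Cplx) : Cplx := Cadd z (Copp w).
Definition Cmul (z w : Cplx) : Cplx :=
  (fst z * fst w - snd z * snd w, fst z * snd w + snd z * fst w).
Definition Cconj (z : Cplx) : Cplx := (fst z, - snd z).
Definition Cinv (z : Cplx) : Cplx :=
  (fst z / (fst z ^ 2 + snd z ^ 2), - snd z / (fst z ^ 2 + snd z ^ 2)).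
Definition Cdiv (z w : Cplx) : Cplx := Cmul z (Cinv w).
Definition Cmod (z : Cplx) : R := sqrt (fst z ^ 2 + snd z ^ 2).

Definition inD (z : Cplx) : Prop := Cmod z < 1.
Definition inD2 (p : Cplx * Cplx) : Prop := inD (fst p) /\ inD (snd p).

Definition mob (a b : Cplx) : R := Cmod (Cdiv (Csub a b) (Csub C1 (Cmul (Cconj a) b))).

Definition holo_disc (f : Cplx -> Cplx) : Prop :=
  forall z, inD z -> exists d : Cplx, forall eps, 0 < eps -> exists delta, 0 < delta /\
    forall h, inD (Cadd z h) -> Cmod h < delta ->
      Cmod (Csub (Csub (f (Cadd z h)) (f z)) (Cmul d h)) <= eps * Cmod h.

Definition holo_bidisc (F : Cplx * Cplx -> Cplx) : Prop :=
  forall z, inD2 z -> exists a b : Cplx, forall eps, 0 < eps -> exists delta, 0 < delta /\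
    forall h : Cplx * Cplx, inD2 (Cadd (fst z) (fst h), Cadd (snd z) (snd h)) ->
      Cmod (fst h) + Cmod (snd h) < delta ->
      Cmod (Csub (Csub (F (Cadd (fst z) (fst h), Cadd (snd z) (snd h))) (F z))
                 (Cadd (Cmul a (fst h)) (Cmul b (snd h))))
        <= eps * (Cmod (fst h) + Cmod (snd h)).

Definition holo_disc_in_bidisc (psi : Cplx -> Cplx * Cplx) : Prop :=
  holo_disc (fun z => fst (psi z)) /\ holo_disc (fun z => snd (psi z)) /\
  forall z, inD z -> inD2 (psi z).

Definition origin2 : Cplx * Cplx := (C0, C0).

Definition l_candidates (p q : Cplx * Cplx) (v : R) : Prop :=
  exists (psi : Cplx -> Cplx * Cplx) (l1 l2 : Cplx),
    holo_disc_in_bidisc psi /\ psi C0 = origin2 /\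
    inD l1 /\ inD l2 /\ psi l1 = p /\ psi l2 = q /\
    v = ln (Cmod l1) + ln (Cmod l2).

(** Candidates for c_{D^2}((0,0); p, q):  log|F(0)|, F : D^2 -> D holomorphic
    vanishing at p and q.  (Only F with F(0) <> 0 are listed, i.e. the
    value -infinity is dropped; this does not change the supremum when
    it is finite.) *)
Definition c_candidates (p q : Cplx * Cplx) (v : R) : Prop :=
  exists F : Cplx * Cplx -> Cplx,
    holo_bidisc F /\ (forall z, inD2 z -> inD (F z)) /\
    F p = C0 /\ F q = C0 /\ F origin2 <> C0 /\
    v = ln (Cmod (F origin2)).

Definition is_glb (E : R -> Prop) (m : R) : Prop :=
  (forall x, E x -> m <= x) /\ (forall b, (forall x, E x -> b <= x) -> b <= m).

Definition c_is (p q : Cplx * Cplx) (v : R) : Prop := is_lub (c_candidates p q) v.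
Definition l_is (p q : Cplx * Cplx) (v : R) : Prop := is_glb (l_candidates p q) v.

Definition inU (p q : Cplx * Cplx) : Prop :=
  inD2 p /\ inD2 q /\
  Cmod (snd p) < Cmod (fst p) /\ Cmod (snd q) < Cmod (fst q) /\
  mob (Cdiv (snd p) (fst p)) (Cdiv (snd q) (fst q)) < mob (fst p) (fst q).

Definition swap (p : Cplx * Cplx) : Cplx * Cplx := (snd p, fst p).

(** For (p, q) in U put w1 = p2/p1 and w2 = q2/q1.  The hypothesis
    m(w1, w2) < m(p1, q1) is exactly what two-point Pick interpolation by a
    Möbius map needs: there is a holomorphic phi : D -> D with phi(p1) = w1 and
    phi(q1) = w2, so the analytic disc z |-> (z, z phi(z)) meets 0, p, q at
    z = 0, p1, q1 and l(p, q) <= log|p1 q1|.  Dually F(w) = m_{p1}(w1) m_{q1}(w1),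
    a product of Möbius maps in the first variable, vanishes at p and q with
    |F(0)| = |p1 q1|, so c(p, q) >= log|p1 q1|.  Both remaining inequalities are
    instances of the two-point Schwarz lemma: a holomorphic g : D -> closed disc
    vanishing at a <> b satisfies |g(0)| <= |a||b|.  We prove it by dividing g by
    the Blaschke product of a and b and bounding the quotient on circles of
    radius r -> 1 through the mean value property, which comes from Goursat's
    theorem on rectangles of the log-polar plane.  The case of sigma(U) follows
    since c and l are invariant under exchanging the coordinates. *)

From Pilot Require Import Defs.
From Stdlib Require Import Reals Lra Lia Classical ZArith.
From Coquelicot Require Import Coquelicot.
Open Scope R_scope.

Notation Cx := Complex.C.
Notation c0 := (RtoC 0).
Notation c1 := (RtoC 1).

(** * Continuity and differentiability of complex functions *)

Lemma Cmod_minus_sym (a b : Cx) : Cmod (a - b)%C = Cmod (b - a)%C.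
Proof. replace (a - b)%C with (- (b - a))%C by ring. apply Cmod_opp. Qed.

Lemma Cmod_triangle_sub (a b : Cx) : Cmod a - Cmod b <= Cmod (a - b)%C.
Proof.
  assert (H := Cmod_triangle (a - b)%C b).
  replace (a - b + b)%C with a in H by ring. lra.
Qed.

Lemma Cmult_integral (a b : Cx) : (a * b)%C = c0 -> a = c0 \/ b = c0.
Proof.
  intros H. destruct (Ceq_dec a c0) as [A|A]; auto. destruct (Ceq_dec b c0) as [B|B]; auto.
  exfalso. apply (Cmult_neq_0 a b); auto.
Qed.

Lemma small_bound_eq_0 (z : Cx) d K : 0 < d ->
  (forall e, 0 < e < d -> Cmod z <= K * e) -> z = c0.
Proof.
  intros Hd H. apply Cmod_eq_0. assert (P := Cmod_ge_0 z).
  destruct (Req_dec (Cmod z) 0) as [Z|Z]; auto. exfalso.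
  set (M := Rabs K + 1). assert (PM : 0 < M) by (unfold M; generalize (Rabs_pos K); lra).
  set (e := Rmin (d / 2) (Cmod z / (2 * M))).
  assert (Pe : 0 < e) by (apply Rmin_pos; [lra|apply Rdiv_lt_0_compat; lra]).
  assert (e <= d / 2) by apply Rmin_l. assert (e <= Cmod z / (2 * M)) by apply Rmin_r.
  specialize (H e ltac:(lra)).
  assert (K * e <= M * e) by (apply Rmult_le_compat_r; [lra|]; unfold M; generalize (Rle_abs K); lra).
  assert (M * e <= Cmod z / 2).
  { apply Rle_trans with (M * (Cmod z / (2 * M))). apply Rmult_le_compat_l; lra.
    right. field. lra. }
  lra.
Qed.

Definition ccont (f : Cx -> Cx) (z : Cx) : Prop :=
  forall eps, 0 < eps -> exists del, 0 < del /\
    forall w, Cmod (w - z)%C < del -> Cmod (f w - f z)%C < eps.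

Lemma ccont_bound f z : ccont f z -> exists del, 0 < del /\
  forall w, Cmod (w - z)%C < del -> Cmod (f w) <= Cmod (f z) + 1.
Proof.
  intros H. destruct (H 1 Rlt_0_1) as [d [Hd Hw]]. exists d; split; auto.
  intros w Hw'. specialize (Hw w Hw').
  assert (T := Cmod_triangle (f w - f z)%C (f z)).
  replace (f w - f z + f z)%C with (f w) in T by ring. lra.
Qed.

Lemma ccont_const c z : ccont (fun _ => c) z.
Proof. intros e He. exists 1; split; [lra|]. intros. replace (c - c)%C with c0 by ring.
  rewrite Cmod_0; lra. Qed.

Lemma ccont_id z : ccont (fun w => w) z.
Proof. intros e He. exists e; split; auto. Qed.

Lemma ccont_plus f g z : ccont f z -> ccont g z -> ccont (fun w => f w + g w)%C z.
Proof.
  intros Hf Hg e He.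
  destruct (Hf (e/2)) as [d1 [Hd1 H1]]; [lra|].
  destruct (Hg (e/2)) as [d2 [Hd2 H2]]; [lra|].
  exists (Rmin d1 d2); split; [apply Rmin_pos; auto|].
  intros w Hw. assert (A1 := H1 w (Rlt_le_trans _ _ _ Hw (Rmin_l _ _))).
  assert (A2 := H2 w (Rlt_le_trans _ _ _ Hw (Rmin_r _ _))).
  replace (f w + g w - (f z + g z))%C with ((f w - f z) + (g w - g z))%C by ring.
  eapply Rle_lt_trans; [apply Cmod_triangle|]. lra.
Qed.

Lemma ccont_opp f z : ccont f z -> ccont (fun w => - f w)%C z.
Proof.
  intros Hf e He. destruct (Hf e He) as [d [Hd H]]. exists d; split; auto.
  intros w Hw. replace (- f w - - f z)%C with (- (f w - f z))%C by ring.
  rewrite Cmod_opp. auto.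
Qed.

Lemma ccont_minus f g z : ccont f z -> ccont g z -> ccont (fun w => f w - g w)%C z.
Proof. intros. apply ccont_plus; auto. apply ccont_opp; auto. Qed.

Lemma ccont_mult f g z : ccont f z -> ccont g z -> ccont (fun w => f w * g w)%C z.
Proof.
  intros Hf Hg e He.
  destruct (ccont_bound g z Hg) as [d0 [Hd0 B]].
  set (Mg := Cmod (g z) + 1). set (A := Cmod (f z) + 1).
  assert (HMg : 0 < Mg) by (unfold Mg; generalize (Cmod_ge_0 (g z)); lra).
  assert (HA : 0 < A) by (unfold A; generalize (Cmod_ge_0 (f z)); lra).
  destruct (Hf (e/(2*Mg))) as [d1 [Hd1 H1]]. { apply Rdiv_lt_0_compat; lra. }
  destruct (Hg (e/(2*A))) as [d2 [Hd2 H2]]. { apply Rdiv_lt_0_compat; lra. }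
  exists (Rmin d0 (Rmin d1 d2)); split. { repeat apply Rmin_pos; auto. }
  intros w Hw.
  assert (W0 : Cmod (w - z)%C < d0) by (eapply Rlt_le_trans; [exact Hw|apply Rmin_l]).
  assert (W1 : Cmod (w - z)%C < d1) by (eapply Rlt_le_trans; [exact Hw|]; eapply Rle_trans; [apply Rmin_r|apply Rmin_l]).
  assert (W2 : Cmod (w - z)%C < d2) by (eapply Rlt_le_trans; [exact Hw|]; eapply Rle_trans; [apply Rmin_r|apply Rmin_r]).
  specialize (B w W0). specialize (H1 w W1). specialize (H2 w W2).
  replace (f w * g w - f z * g z)%C with ((f w - f z) * g w + f z * (g w - g z))%C by ring.
  eapply Rle_lt_trans; [apply Cmod_triangle|]. rewrite !Cmod_mult.
  assert (E3 : e/(2*Mg) * Mg = e/2) by (field; lra).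
  assert (E4 : A * (e/(2*A)) = e/2) by (field; lra).
  assert (S1 : Cmod (f w - f z)%C * Cmod (g w) < e/2 \/ Cmod (g w) = 0).
  { destruct (Req_dec (Cmod (g w)) 0) as [Z|Z]; [right; auto|left].
    assert (0 < Cmod (g w)) by (generalize (Cmod_ge_0 (g w)); lra).
    apply Rlt_le_trans with (e/(2*Mg) * Cmod (g w)). apply Rmult_lt_compat_r; auto.
    rewrite <- E3. apply Rmult_le_compat_l; [apply Rlt_le, Rdiv_lt_0_compat; lra| auto]. }
  assert (S2 : Cmod (f z) * Cmod (g w - g z)%C < e/2).
  { apply Rle_lt_trans with (Cmod (f z) * (e/(2*A))).
    apply Rmult_le_compat_l; auto using Cmod_ge_0; lra.
    rewrite <- E4. apply Rmult_lt_compat_r. apply Rdiv_lt_0_compat; lra. unfold A; lra. }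
  destruct S1 as [S1|S1]. lra. rewrite S1. lra.
Qed.

Lemma ccont_inv f z : ccont f z -> f z <> c0 -> ccont (fun w => / f w)%C z.
Proof.
  intros Hf Hz e He.
  set (m := Cmod (f z)). assert (Hm : 0 < m) by (apply Cmod_gt_0; auto).
  destruct (Hf (Rmin (m/2) (e*m*m/2))) as [d [Hd H]].
  { apply Rmin_pos; [lra|]. apply Rdiv_lt_0_compat; [|lra]. repeat apply Rmult_lt_0_compat; auto. }
  exists d; split; auto. intros w Hw. specialize (H w Hw).
  assert (H1 : Cmod (f w - f z)%C < m/2) by (eapply Rlt_le_trans; [exact H|apply Rmin_l]).
  assert (H2 : Cmod (f w - f z)%C < e*m*m/2) by (eapply Rlt_le_trans; [exact H|apply Rmin_r]).
  assert (Hfw : m/2 <= Cmod (f w)).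
  { assert (T := Cmod_triangle_sub (f z) (f w)). rewrite Cmod_minus_sym in T. fold m in T. lra. }
  assert (Hfw0 : f w <> c0). { intro E. rewrite E, Cmod_0 in Hfw. lra. }
  replace (/ f w - / f z)%C with ((f z - f w) / (f w * f z))%C by (field; auto).
  rewrite Cmod_div by (intro E; apply Cmult_integral in E; tauto).
  rewrite Cmod_mult, Cmod_minus_sym. fold m.
  apply Rlt_le_trans with ((e*m*m/2) / (Cmod (f w) * m)).
  { unfold Rdiv at 1. apply Rmult_lt_compat_r; auto. apply Rinv_0_lt_compat.
    apply Rmult_lt_0_compat; lra. }
  apply Rle_trans with ((e*m*m/2) / (m/2 * m)).
  { unfold Rdiv. apply Rmult_le_compat_l. apply Rlt_le. repeat apply Rmult_lt_0_compat; lra.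
    apply Rinv_le_contravar. apply Rmult_lt_0_compat; lra. apply Rmult_le_compat_r; lra. }
  right. field. lra.
Qed.

Lemma ccont_comp f g z : ccont g z -> ccont f (g z) -> ccont (fun w => f (g w)) z.
Proof.
  intros Hg Hf e He. destruct (Hf e He) as [d1 [Hd1 H1]].
  destruct (Hg d1 Hd1) as [d2 [Hd2 H2]]. exists d2; split; auto.
Qed.

Lemma ccont_of_translate f z : ccont (fun h => f (z + h)%C) c0 -> ccont f z.
Proof.
  intros H e He. destruct (H e He) as [d [Hd Hw]]. exists d; split; auto.
  intros w Hw'. specialize (Hw (w - z)%C).
  replace (z + (w - z))%C with w in Hw by ring. replace (z + c0)%C with z in Hw by ring.
  apply Hw. replace (w - z - 0)%C with (w - z)%C by ring. auto.
Qed.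

Lemma ccont_translate f z : ccont f z -> ccont (fun h => f (z + h)%C) c0.
Proof.
  intros H e He. destruct (H e He) as [d [Hd Hw]]. exists d; split; auto.
  intros w Hw'. replace (z + c0)%C with z by ring. apply Hw.
  replace (z + w - z)%C with (w - 0)%C by ring. auto.
Qed.

(** Carathéodory's form of complex differentiability: [cara f z d] says that
    the difference quotient of [f] at [z] extends to a function continuous at
    [0] with value [d] there.  This makes the quotient [g w / (w - a)] at a zero
    [a] of [g] available without any further limit argument. *)
Definition cara (f : Cx -> Cx) (z : Cx) (d : Cx) : Prop :=
  exists phi : Cx -> Cx, (forall h, f (z + h)%C = (f z + phi h * h)%C) /\ phi c0 = d /\ ccont phi c0.

Definition cdiff f z := exists d, cara f z d.

Lemma cara_ccont f z d : cara f z d -> ccont f z.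
Proof.
  intros [phi [E [_ Hc]]]. apply ccont_of_translate.
  assert (ccont (fun h => f z + phi h * h)%C c0).
  { apply ccont_plus. apply ccont_const. apply ccont_mult; auto. apply ccont_id. }
  intros e He. destruct (H e He) as [del [Hd Hw]]. exists del; split; auto.
  intros w Hw'. rewrite !E. auto.
Qed.

Lemma cara_const c z : cara (fun _ => c) z c0.
Proof. exists (fun _ => c0). repeat split. intros; ring. apply ccont_const. Qed.

Lemma cara_id z : cara (fun w => w) z c1.
Proof. exists (fun _ => c1). repeat split. intros; ring. apply ccont_const. Qed.

Lemma cara_plus f g z a b : cara f z a -> cara g z b -> cara (fun w => f w + g w)%C z (a + b)%C.
Proof.
  intros [p [Ep [Pp Cp]]] [q [Eq [Pq Cq]]]. exists (fun h => p h + q h)%C. repeat split.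
  intros h. rewrite Ep, Eq. ring. rewrite Pp, Pq; auto. apply ccont_plus; auto.
Qed.

Lemma cara_opp f z a : cara f z a -> cara (fun w => - f w)%C z (- a)%C.
Proof.
  intros [p [Ep [Pp Cp]]]. exists (fun h => - p h)%C. repeat split.
  intros h. rewrite Ep. ring. rewrite Pp; auto. apply ccont_opp; auto.
Qed.

Lemma cara_minus f g z a b : cara f z a -> cara g z b -> cara (fun w => f w - g w)%C z (a - b)%C.
Proof. intros. apply cara_plus; auto. apply cara_opp; auto. Qed.

Lemma cara_mult f g z a b : cara f z a -> cara g z b -> cara (fun w => f w * g w)%C z (a * g z + f z * b)%C.
Proof.
  intros Hf Hg. assert (Cg := cara_ccont _ _ _ Hg).
  destruct Hf as [p [Ep [Pp Cp]]]. destruct Hg as [q [Eq [Pq Cq]]].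
  exists (fun h => p h * g (z + h) + f z * q h)%C. repeat split.
  - intros h. rewrite Ep, !Eq. ring.
  - rewrite Pp, Pq. replace (z + c0)%C with z by ring. auto.
  - apply ccont_plus. apply ccont_mult; auto. apply ccont_translate; auto.
    apply ccont_mult. apply ccont_const. auto.
Qed.

Lemma cara_comp f g z a b : cara g z b -> cara f (g z) a -> cara (fun w => f (g w)) z (a * b)%C.
Proof.
  intros [q [Eq [Pq Cq]]] [p [Ep [Pp Cp]]].
  exists (fun h => p (q h * h) * q h)%C. repeat split.
  - intros h. rewrite Eq, Ep. ring.
  - rewrite Pq. replace (b * c0)%C with c0 by ring. rewrite Pp. auto.
  - apply ccont_mult; auto. apply ccont_comp.
    + apply ccont_mult; auto. apply ccont_id.
    + replace (q c0 * c0)%C with c0 by ring. auto.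
Qed.

Lemma cara_local f z d psi del : 0 < del ->
  (forall h, h <> c0 -> Cmod h < del -> (f (z + h) - f z = psi h * h)%C) ->
  psi c0 = d -> ccont psi c0 -> cara f z d.
Proof.
  intros Hdel E Pd Cp.
  set (phi := fun h => if Ceq_dec h c0 then d else ((f (z + h) - f z) / h)%C).
  exists phi. repeat split.
  - intros h. unfold phi. destruct (Ceq_dec h c0) as [H|H].
    + subst. replace (z + c0)%C with z by ring. ring.
    + field. auto.
  - unfold phi. destruct (Ceq_dec c0 c0); tauto.
  - intros e He. destruct (Cp e He) as [d1 [Hd1 H1]].
    exists (Rmin del d1); split. apply Rmin_pos; auto.
    intros w Hw. unfold phi. destruct (Ceq_dec c0 c0) as [_|C]; [|tauto].
    destruct (Ceq_dec w c0) as [W|W].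
    + replace (d - d)%C with c0 by ring. rewrite Cmod_0; auto.
    + assert (Hw0 : Cmod (w - c0)%C < Rmin del d1) by exact Hw.
      replace (w - c0)%C with w in Hw0 by ring.
      rewrite <- Pd. replace ((f (z + w) - f z) / w)%C with (psi w).
      apply H1. replace (w - c0)%C with w by ring. eapply Rlt_le_trans; [exact Hw0|apply Rmin_r].
      rewrite E; auto. field; auto. eapply Rlt_le_trans; [exact Hw0|apply Rmin_l].
Qed.

Lemma cara_inv f z a : cara f z a -> f z <> c0 -> cara (fun w => / f w)%C z (- a / (f z * f z))%C.
Proof.
  intros Hf Hz. assert (Cf := cara_ccont _ _ _ Hf).
  assert (Cs := ccont_translate _ _ Cf).
  destruct Hf as [p [Ep [Pp Cp]]].
  destruct (Cs (Cmod (f z))) as [d [Hd Hb]]. apply Cmod_gt_0; auto.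
  apply (cara_local _ _ _ (fun h => - p h / (f (z + h) * f z))%C d Hd).
  - intros h _ Hh. specialize (Hb h). replace (h - c0)%C with h in Hb by ring.
    specialize (Hb Hh). replace (z + c0)%C with z in Hb by ring.
    assert (f (z + h)%C <> c0).
    { intro F. rewrite F in Hb. replace (c0 - f z)%C with (- f z)%C in Hb by ring.
      rewrite Cmod_opp in Hb. lra. }
    rewrite (Ep h) in *. field. split; auto.
  - rewrite Pp. replace (z + c0)%C with z by ring. auto.
  - apply ccont_mult. apply ccont_opp; auto.
    apply ccont_inv. apply ccont_mult; auto. apply ccont_const.
    replace (z + c0)%C with z by ring. intro F. apply Cmult_integral in F. tauto.
Qed.

Lemma cara_div f g z a b : cara f z a -> cara g z b -> g z <> c0 ->
  cara (fun w => f w / g w)%C z (a * / g z + f z * (- b / (g z * g z)))%C.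
Proof. intros Hf Hg Hz. exact (cara_mult f (fun w => / g w)%C z a _ Hf (cara_inv g z b Hg Hz)). Qed.

Lemma cara_local_ext f g z d del : 0 < del -> (forall w, Cmod (w - z)%C < del -> f w = g w) ->
  cara g z d -> cara f z d.
Proof.
  intros Hd E [phi [Ep [P0 Cp]]].
  apply (cara_local f z d phi del Hd); auto.
  intros h Hh Hhd. rewrite !E. rewrite Ep. ring.
  replace (z - z)%C with c0 by ring. rewrite Cmod_0; auto.
  replace (z + h - z)%C with h by ring. auto.
Qed.

Lemma cdiff_ccont f z : cdiff f z -> ccont f z.
Proof. intros [d H]. eapply cara_ccont; eauto. Qed.

Lemma cdiff_const c z : cdiff (fun _ => c) z.
Proof. eexists; apply cara_const. Qed.

Lemma cdiff_id z : cdiff (fun w => w) z.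
Proof. eexists; apply cara_id. Qed.

Lemma cdiff_minus f g z : cdiff f z -> cdiff g z -> cdiff (fun w => f w - g w)%C z.
Proof. intros [a Ha] [b Hb]. eexists; apply cara_minus; eauto. Qed.

Lemma cdiff_mult f g z : cdiff f z -> cdiff g z -> cdiff (fun w => f w * g w)%C z.
Proof. intros [a Ha] [b Hb]. eexists; apply cara_mult; eauto. Qed.

Lemma cdiff_div f g z : cdiff f z -> cdiff g z -> g z <> c0 -> cdiff (fun w => f w / g w)%C z.
Proof. intros [a Ha] [b Hb] Hz. eexists; apply cara_div; eauto. Qed.

Lemma cdiff_comp f g z : cdiff g z -> cdiff f (g z) -> cdiff (fun w => f (g w)) z.
Proof. intros [a Ha] [b Hb]. eexists; apply cara_comp; eauto. Qed.

(** * The complex exponential *)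

Definition cexp (w : Cx) : Cx := (exp (fst w) * cos (snd w), exp (fst w) * sin (snd w)).

Lemma cexp_add a b : cexp (a + b)%C = (cexp a * cexp b)%C.
Proof.
  destruct a as [a1 a2], b as [b1 b2]. unfold cexp, Cplus, Cmult; simpl.
  rewrite exp_plus, cos_plus, sin_plus. f_equal; ring.
Qed.

Lemma Cmod_cexp w : Cmod (cexp w) = exp (fst w).
Proof.
  unfold cexp, Cmod; cbn [fst snd].
  replace ((exp (fst w) * cos (snd w)) ^ 2 + (exp (fst w) * sin (snd w)) ^ 2)
    with (exp (fst w) ^ 2 * (sin (snd w) ^ 2 + cos (snd w) ^ 2)) by ring.
  assert (H := sin2_cos2 (snd w)). unfold Rsqr in H.
  replace (sin (snd w) ^ 2 + cos (snd w) ^ 2) with 1 by (simpl; lra).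
  rewrite Rmult_1_r. apply sqrt_pow2. apply Rlt_le, exp_pos.
Qed.

Lemma cexp_ne0 w : cexp w <> c0.
Proof. intro E. assert (H := Cmod_cexp w). rewrite E, Cmod_0 in H. generalize (exp_pos (fst w)); lra. Qed.

Lemma exp_bounds a : Rabs a <= 1/2 -> 1 + a <= exp a /\ exp a - 1 - a <= 2 * a^2 /\ exp a <= 2.
Proof.
  intros Ha. apply Rabs_le_between in Ha.
  assert (H1 := exp_ineq1_le a). assert (H2 := exp_ineq1_le (-a)).
  assert (E : exp a * exp (-a) = 1) by (rewrite <- exp_plus; replace (a + - a) with 0 by ring; apply exp_0).
  assert (P := exp_pos a).
  assert (U : exp a <= 1 / (1 - a)).
  { apply Rmult_le_reg_r with (1 - a). lra. field_simplify; try lra. nra. }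
  split; [lra|]. split.
  - apply Rle_trans with (1/(1-a) - 1 - a). lra.
    replace (1/(1-a) - 1 - a) with (a^2/(1-a)) by (field; lra).
    apply Rmult_le_reg_r with (1 - a). lra. field_simplify; try lra. nra.
  - apply Rle_trans with (1/(1-a)); auto. apply Rmult_le_reg_r with (1 - a). lra. field_simplify; lra.
Qed.

Lemma sin_bounds b : Rabs b <= 1/2 -> Rabs (sin b) <= Rabs b /\ Rabs (sin b - b) <= b^2.
Proof.
  intros Hb.
  assert (K : forall c, 0 <= c <= 1/2 -> 0 <= sin c <= c /\ c - sin c <= c^2).
  { intros c Hc. assert (PI2 := PI2_1).
    destruct (Req_dec c 0) as [Z|Z]. subst. rewrite sin_0. lra.
    assert (L := sin_lt_x c). assert (B := sin_bound c 0). simpl (2 * 0 + 1)%nat in B.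
    assert (S : sin_approx c 1 = c - c^3/6) by (unfold sin_approx, sin_term; simpl; field).
    destruct B as [B _]; try lra. rewrite S in B. split. split; nra. nra. }
  destruct (Rle_dec 0 b) as [P|N].
  - rewrite Rabs_right in Hb by lra. destruct (K b) as [[K1 K2] K3]; [lra|].
    rewrite Rabs_right by lra. rewrite (Rabs_left1 (sin b - b)) by lra. split. rewrite Rabs_right; lra. lra.
  - rewrite Rabs_left in Hb by lra. destruct (K (-b)) as [[K1 K2] K3]; [lra|].
    rewrite sin_neg in *. rewrite (Rabs_left b) by lra.
    split. rewrite Rabs_left1 by lra. lra. rewrite Rabs_right by lra. nra.
Qed.

Lemma cos_bounds b : Rabs b <= 1/2 -> Rabs (cos b - 1) <= b^2.
Proof.
  intros Hb. apply Rabs_le_between in Hb. assert (PI2 := PI2_1).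
  destruct (COS b) as [L U]; try lra.
  assert (S : cos_lb b = 1 - b^2/2 + b^4/24 - b^6/720) by (unfold cos_lb, cos_approx, cos_term; simpl; field).
  rewrite S in L. assert (C1 := COS_bound b).
  rewrite Rabs_left1 by lra. nra.
Qed.

Lemma Cmod_le_sum (z : Cx) : Cmod z <= Rabs (fst z) + Rabs (snd z).
Proof.
  unfold Cmod. generalize (Rabs_pos (fst z)) (Rabs_pos (snd z)). intros.
  rewrite <- (sqrt_pow2 (Rabs (fst z) + Rabs (snd z))) by lra.
  apply sqrt_le_1_alt. rewrite <- (pow2_abs (fst z)), <- (pow2_abs (snd z)). nra.
Qed.

Lemma Rabs_fst_le (z : Cx) : Rabs (fst z) <= Cmod z.
Proof. assert (H := Rmax_Cmod z). eapply Rle_trans; [apply Rmax_l|exact H]. Qed.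
Lemma Rabs_snd_le (z : Cx) : Rabs (snd z) <= Cmod z.
Proof. assert (H := Rmax_Cmod z). eapply Rle_trans; [apply Rmax_r|exact H]. Qed.

Lemma cexp_taylor h : Cmod h <= 1/2 -> Cmod (cexp h - c1 - h)%C <= 4 * Cmod h ^ 2.
Proof.
  intros Hh. destruct h as [a b].
  assert (Ha := Rabs_fst_le (a,b)). assert (Hb := Rabs_snd_le (a,b)). simpl in Ha, Hb.
  set (m := Cmod (a,b)) in *.
  destruct (exp_bounds a) as [E1 [E2 E3]]; [lra|].
  destruct (sin_bounds b) as [S1 S2]; [lra|].
  assert (C := cos_bounds b). specialize (C ltac:(lra)).
  eapply Rle_trans; [apply Cmod_le_sum|]. unfold cexp, Cminus, Cplus, Copp; simpl.
  assert (A2 : a^2 <= m^2) by (rewrite <- (pow2_abs a); generalize (Rabs_pos a); intro; nra).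
  assert (B2 : b^2 <= m^2) by (rewrite <- (pow2_abs b); generalize (Rabs_pos b); intro; nra).
  assert (M2 : a^2 + b^2 = m^2).
  { unfold m, Cmod. cbn [fst snd]. rewrite pow2_sqrt. ring. generalize (pow2_ge_0 a) (pow2_ge_0 b); lra. }
  assert (R1 : Rabs (exp a * cos b + - (1) + - a) <= 2 * a^2 + 2 * b^2).
  { replace (exp a * cos b + - (1) + -a) with ((exp a - 1 - a) + exp a * (cos b - 1)) by ring.
    eapply Rle_trans; [apply Rabs_triang|]. rewrite Rabs_mult. apply Rplus_le_compat.
    rewrite Rabs_right by lra. lra.
    rewrite Rabs_right by (apply Rle_ge, Rlt_le, exp_pos).
    apply Rle_trans with (2 * b^2). apply Rmult_le_compat; auto using Rabs_pos. apply Rlt_le, exp_pos. lra. }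
  assert (R2 : Rabs (exp a * sin b + - 0 + - b) <= 2 * Rabs a * Rabs b + b^2).
  { replace (exp a * sin b + - 0 + - b) with ((exp a - 1) * sin b + (sin b - b)) by ring.
    eapply Rle_trans; [apply Rabs_triang|]. rewrite Rabs_mult. apply Rplus_le_compat; [|lra].
    assert (Rabs (exp a - 1) <= 2 * Rabs a).
    { apply Rabs_le. assert (Q := proj1 (Rabs_le_between _ _) Ha). 
      rewrite <- (pow2_abs a) in E2. unfold Rabs in *. destruct (Rcase_abs a); nra. }
    apply Rmult_le_compat; auto using Rabs_pos. }
  assert (2 * Rabs a * Rabs b <= a^2 + b^2).
  { rewrite <- (pow2_abs a), <- (pow2_abs b). assert (0 <= (Rabs a - Rabs b)^2) by apply pow2_ge_0. nra. }
  assert (m*(m*1) = m^2) by ring. lra.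
Qed.

Lemma cara_cexp w : cara cexp w (cexp w).
Proof.
  set (E := fun h => if Ceq_dec h c0 then c1 else ((cexp h - c1) / h)%C).
  apply (cara_local _ _ _ (fun h => cexp w * E h)%C (1/2)); [lra| | |].
  - intros h Hh _. unfold E. destruct (Ceq_dec h c0) as [Z|Z]; [tauto|].
    rewrite cexp_add. field. auto.
  - unfold E. destruct (Ceq_dec c0 c0) as [_|Z]; [|tauto]. ring.
  - apply ccont_mult. apply ccont_const.
    intros e He. exists (Rmin (1/2) (e/8)). split. apply Rmin_pos; lra.
    intros h Hh. replace (h - c0)%C with h in Hh by ring.
    unfold E. destruct (Ceq_dec c0 c0) as [_|Z]; [|tauto].
    destruct (Ceq_dec h c0) as [Z|Z].
    + replace (c1 - c1)%C with c0 by ring. rewrite Cmod_0. lra.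
    + replace ((cexp h - c1) / h - c1)%C with ((cexp h - c1 - h) / h)%C by (field; auto).
      assert (Hp := proj1 (Cmod_gt_0 h) Z).
      rewrite Cmod_div by auto.
      assert (T := cexp_taylor h). specialize (T ltac:(apply Rlt_le; eapply Rlt_le_trans; [exact Hh|apply Rmin_l])).
      apply Rle_lt_trans with (4 * Cmod h ^ 2 / Cmod h).
      unfold Rdiv. apply Rmult_le_compat_r; auto. apply Rlt_le, Rinv_0_lt_compat; auto.
      replace (4 * Cmod h ^ 2 / Cmod h) with (4 * Cmod h) by (field; lra).
      assert (Cmod h < e/8) by (eapply Rlt_le_trans; [exact Hh|apply Rmin_r]). lra.
Qed.

Lemma cexp_eq_1 u : cexp u = c1 -> Cmod u < 1 -> u = c0.
Proof.
  intros E Hu. destruct u as [u1 u2].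
  assert (H1 := Rabs_fst_le (u1,u2)). assert (H2 := Rabs_snd_le (u1,u2)). simpl in H1, H2.
  unfold cexp, RtoC in E. cbn [fst snd] in E. injection E as E1 E2.
  assert (P := exp_pos u1). assert (PI2 := PI2_1).
  assert (S : sin u2 = 0).
  { apply Rmult_eq_reg_l with (exp u1). lra. lra. }
  assert (U2 : u2 = 0).
  { destruct (Rtotal_order u2 0) as [N|[Z|Q]]; auto.
    - assert (0 < sin (- u2)) by (apply sin_gt_0; apply Rabs_le_between in H2; lra).
      rewrite sin_neg in H. lra.
    - assert (0 < sin u2) by (apply sin_gt_0; apply Rabs_le_between in H2; lra). lra. }
  subst u2. rewrite cos_0 in E1. rewrite Rmult_1_r in E1.
  assert (u1 = 0). { apply exp_inv. rewrite exp_0. auto. }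
  subst. reflexivity.
Qed.

Lemma cexp_inj_loc a b : cexp a = cexp b -> Cmod (a - b)%C < 1 -> a = b.
Proof.
  intros E H.
  assert (cexp (a - b)%C = c1).
  { assert (X := cexp_add (a - b)%C b). replace (a - b + b)%C with a in X by ring.
    rewrite E in X. assert (Y := cexp_ne0 b).
    transitivity ((cexp (a - b) * cexp b) / cexp b)%C; [field; auto|]. rewrite <- X. field. auto. }
  assert (Z := cexp_eq_1 _ H0 H).
  replace a with ((a - b) + b)%C by ring. rewrite Z. ring.
Qed.

Lemma cexp_2pi x : cexp (x, 2 * PI) = cexp (x, 0).
Proof. unfold cexp. cbn [fst snd]. rewrite cos_2PI, sin_2PI, cos_0, sin_0. reflexivity. Qed.

(** * Goursat's theorem for rectangles *)

Notation CInt f a b := (@RInt C_R_CompleteNormedModule f a b).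
Notation exCInt f a b := (@ex_RInt C_R_NormedModule f a b).

Definition hseg_int (k : Cx -> Cx) x0 x1 y : Cx := CInt (fun x => k (x, y)) x0 x1.
Definition vseg_int (k : Cx -> Cx) x y0 y1 : Cx := CInt (fun y => k (x, y)) y0 y1.
(** The contour integral of [k] over the positively oriented boundary of the
    rectangle [x0, x1] x [y0, y1]: [dz] is [dx] on the horizontal sides and
    [i dy] on the vertical ones. *)
Definition rect_int k x0 x1 y0 y1 : Cx :=
  (hseg_int k x0 x1 y0 - hseg_int k x0 x1 y1 + Ci * (vseg_int k x1 y0 y1 - vseg_int k x0 y0 y1))%C.
Definition in_rect x0 x1 y0 y1 (w : Cx) := x0 <= fst w <= x1 /\ y0 <= snd w <= y1.
Definition cont_rect k x0 x1 y0 y1 := forall w, in_rect x0 x1 y0 y1 w -> ccont k w.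

Lemma continuous_hseg (k : Cx -> Cx) x y : ccont k (x,y) -> continuous (fun t => k (t, y)) x.
Proof.
  intros H P [eps HP]. destruct (H eps (cond_pos eps)) as [d [Hd Hw]].
  exists (mkposreal d Hd). intros t Ht. apply HP. apply C_NormedModule_mixin_compat1.
  apply Hw. replace ((t, y) - (x, y))%C with (RtoC (t - x)). rewrite Cmod_R. exact Ht.
  unfold Cminus, Cplus, Copp, RtoC. simpl. f_equal; ring.
Qed.

Lemma continuous_vseg (k : Cx -> Cx) x y : ccont k (x,y) -> continuous (fun t => k (x, t)) y.
Proof.
  intros H P [eps HP]. destruct (H eps (cond_pos eps)) as [d [Hd Hw]].
  exists (mkposreal d Hd). intros t Ht. apply HP. apply C_NormedModule_mixin_compat1.
  apply Hw. replace ((x, t) - (x, y))%C with (Ci * RtoC (t - y))%C.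
  rewrite Cmod_mult, Cmod_Ci, Cmod_R, Rmult_1_l. exact Ht.
  unfold Cminus, Cplus, Copp, Cmult, Ci, RtoC. simpl. f_equal; ring.
Qed.

Lemma cont_rect_sub k x0 x1 y0 y1 a0 a1 b0 b1 : x0 <= a0 -> a1 <= x1 -> y0 <= b0 -> b1 <= y1 ->
  cont_rect k x0 x1 y0 y1 -> cont_rect k a0 a1 b0 b1.
Proof. intros H1 H2 H3 H4 H w [W1 W2]. apply H. split; lra. Qed.

Lemma ex_hseg_int k x0 x1 y0 y1 y : x0 <= x1 -> y0 <= y <= y1 -> cont_rect k x0 x1 y0 y1 ->
  exCInt (fun x => k (x,y)) x0 x1.
Proof.
  intros H1 H2 H. apply (@ex_RInt_continuous C_R_CompleteNormedModule).
  intros z Hz. rewrite Rmin_left, Rmax_right in Hz by auto.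
  apply continuous_hseg. apply H. split; simpl; lra.
Qed.

Lemma ex_vseg_int k x0 x1 y0 y1 x : y0 <= y1 -> x0 <= x <= x1 -> cont_rect k x0 x1 y0 y1 ->
  exCInt (fun y => k (x,y)) y0 y1.
Proof.
  intros H1 H2 H. apply (@ex_RInt_continuous C_R_CompleteNormedModule).
  intros z Hz. rewrite Rmin_left, Rmax_right in Hz by auto.
  apply continuous_vseg. apply H. split; simpl; lra.
Qed.

Lemma CInt_Chasles f a b c : exCInt f a b -> exCInt f b c -> CInt f a c = (CInt f a b + CInt f b c)%C.
Proof. intros. symmetry. exact (@RInt_Chasles C_R_CompleteNormedModule f a b c H H0). Qed.

Lemma rect_int_split_x k x0 m x1 y0 y1 : x0 <= m <= x1 -> y0 <= y1 -> cont_rect k x0 x1 y0 y1 ->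
  rect_int k x0 x1 y0 y1 = (rect_int k x0 m y0 y1 + rect_int k m x1 y0 y1)%C.
Proof.
  intros Hm Hy H. unfold rect_int, hseg_int.
  assert (HL := cont_rect_sub k x0 x1 y0 y1 x0 m y0 y1 ltac:(lra) ltac:(lra) ltac:(lra) ltac:(lra) H).
  assert (HR := cont_rect_sub k x0 x1 y0 y1 m x1 y0 y1 ltac:(lra) ltac:(lra) ltac:(lra) ltac:(lra) H).
  rewrite (CInt_Chasles (fun x => k (x, y0)) x0 m x1).
  rewrite (CInt_Chasles (fun x => k (x, y1)) x0 m x1). ring.
  all: try (apply (ex_hseg_int k x0 m y0 y1); auto; lra).
  all: apply (ex_hseg_int k m x1 y0 y1); auto; lra.
Qed.

Lemma rect_int_split_y k x0 x1 y0 m y1 : y0 <= m <= y1 -> x0 <= x1 -> cont_rect k x0 x1 y0 y1 ->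
  rect_int k x0 x1 y0 y1 = (rect_int k x0 x1 y0 m + rect_int k x0 x1 m y1)%C.
Proof.
  intros Hm Hx H. unfold rect_int, vseg_int.
  assert (HL := cont_rect_sub k x0 x1 y0 y1 x0 x1 y0 m ltac:(lra) ltac:(lra) ltac:(lra) ltac:(lra) H).
  assert (HR := cont_rect_sub k x0 x1 y0 y1 x0 x1 m y1 ltac:(lra) ltac:(lra) ltac:(lra) ltac:(lra) H).
  rewrite (CInt_Chasles (fun y => k (x1, y)) y0 m y1).
  rewrite (CInt_Chasles (fun y => k (x0, y)) y0 m y1). ring.
  all: try (apply (ex_vseg_int k x0 x1 y0 m); auto; lra).
  all: apply (ex_vseg_int k x0 x1 m y1); auto; lra.
Qed.

Lemma rect_int_flat_x k x y0 y1 : rect_int k x x y0 y1 = c0.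
Proof. unfold rect_int, hseg_int. rewrite !RInt_point. unfold zero; simpl. ring. Qed.

Lemma rect_int_flat_y k x0 x1 y : rect_int k x0 x1 y y = c0.
Proof. unfold rect_int, vseg_int. rewrite !RInt_point. unfold zero; simpl. ring. Qed.

Lemma CInt_bound f a b M : a <= b -> exCInt f a b ->
  (forall x, a <= x <= b -> Cmod (f x) <= M) -> Cmod (CInt f a b) <= (b - a) * M.
Proof.
  intros Hab Hex HM.
  assert (HM' : forall x, a <= x <= b -> norm (f x) <= M) by (intros; rewrite <- Cmod_norm; auto).
  rewrite Cmod_norm.
  exact (@norm_RInt_le_const C_R_NormedModule f a b (CInt f a b) M Hab HM' 
    (@RInt_correct C_R_CompleteNormedModule f a b Hex)).
Qed.

Lemma CInt_minus (f g : R -> Cx) a b : exCInt f a b -> exCInt g a b ->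
  CInt (fun x => f x - g x)%C a b = (CInt f a b - CInt g a b)%C.
Proof. intros Hf Hg. exact (@RInt_minus C_R_CompleteNormedModule f g a b Hf Hg). Qed.

Lemma rect_int_bound k x0 x1 y0 y1 M : x0 <= x1 -> y0 <= y1 -> cont_rect k x0 x1 y0 y1 ->
  (forall w, in_rect x0 x1 y0 y1 w -> Cmod (k w) <= M) ->
  Cmod (rect_int k x0 x1 y0 y1) <= 2 * (x1 - x0) * M + 2 * (y1 - y0) * M.
Proof.
  intros Hx Hy H HM. unfold rect_int, hseg_int, vseg_int.
  assert (B1 : Cmod (CInt (fun x => k (x, y0)) x0 x1) <= (x1 - x0) * M).
  { apply CInt_bound; auto. apply (ex_hseg_int k x0 x1 y0 y1); auto; lra. intros; apply HM; split; simpl; lra. }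
  assert (B2 : Cmod (CInt (fun x => k (x, y1)) x0 x1) <= (x1 - x0) * M).
  { apply CInt_bound; auto. apply (ex_hseg_int k x0 x1 y0 y1); auto; lra. intros; apply HM; split; simpl; lra. }
  assert (B3 : Cmod (CInt (fun y => k (x1, y)) y0 y1) <= (y1 - y0) * M).
  { apply CInt_bound; auto. apply (ex_vseg_int k x0 x1 y0 y1); auto; lra. intros; apply HM; split; simpl; lra. }
  assert (B4 : Cmod (CInt (fun y => k (x0, y)) y0 y1) <= (y1 - y0) * M).
  { apply CInt_bound; auto. apply (ex_vseg_int k x0 x1 y0 y1); auto; lra. intros; apply HM; split; simpl; lra. }
  set (A1 := CInt (fun x => k (x, y0)) x0 x1) in *.
  set (A2 := CInt (fun x => k (x, y1)) x0 x1) in *.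
  set (A3 := CInt (fun y => k (x1, y)) y0 y1) in *.
  set (A4 := CInt (fun y => k (x0, y)) y0 y1) in *.
  eapply Rle_trans; [apply Cmod_triangle|].
  rewrite Cmod_mult, Cmod_Ci, Rmult_1_l.
  assert (T1 := Cmod_triangle A1 (- A2)%C). rewrite Cmod_opp in T1.
  assert (T2 := Cmod_triangle A3 (- A4)%C). rewrite Cmod_opp in T2.
  unfold Cminus. lra.
Qed.

Lemma rect_int_minus k g x0 x1 y0 y1 : x0 <= x1 -> y0 <= y1 -> cont_rect k x0 x1 y0 y1 -> cont_rect g x0 x1 y0 y1 ->
  rect_int (fun w => k w - g w)%C x0 x1 y0 y1 = (rect_int k x0 x1 y0 y1 - rect_int g x0 x1 y0 y1)%C.
Proof.
  intros Hx Hy Hk Hg. unfold rect_int, hseg_int, vseg_int.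
  rewrite !(@RInt_minus C_R_CompleteNormedModule).
  unfold minus; simpl. change plus with Cplus. change opp with Copp. ring.
  all: first [apply (ex_hseg_int _ x0 x1 y0 y1); auto; lra | apply (ex_vseg_int _ x0 x1 y0 y1); auto; lra].
Qed.

Lemma ccont_affine (al be : Cx) w : ccont (fun w => al + be * w)%C w.
Proof. apply ccont_plus. apply ccont_const. apply ccont_mult. apply ccont_const. apply ccont_id. Qed.

Lemma cont_rect_affine al be x0 x1 y0 y1 : cont_rect (fun w => al + be * w)%C x0 x1 y0 y1.
Proof. intros w _. apply ccont_affine. Qed.

Lemma rect_int_affine al be x0 x1 y0 y1 : x0 <= x1 -> y0 <= y1 -> rect_int (fun w => al + be * w)%C x0 x1 y0 y1 = c0.
Proof.
  intros Hx Hy. set (A := (fun w => al + be * w)%C).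
  assert (HA := cont_rect_affine al be x0 x1 y0 y1). fold A in HA.
  unfold rect_int, hseg_int, vseg_int.
  replace (CInt (fun x => A (x, y0)) x0 x1 - CInt (fun x => A (x, y1)) x0 x1)%C
    with (CInt (fun x => A (x, y0) - A (x, y1))%C x0 x1).
  replace (CInt (fun y => A (x1, y)) y0 y1 - CInt (fun y => A (x0, y)) y0 y1)%C
    with (CInt (fun y => A (x1, y) - A (x0, y))%C y0 y1).
  rewrite (@RInt_ext C_R_CompleteNormedModule _ (fun _ => be * (Ci * RtoC (y0 - y1)))%C).
  rewrite (@RInt_ext C_R_CompleteNormedModule (fun y => A (x1, y) - A (x0, y))%C (fun _ => be * RtoC (x1 - x0))%C).
  rewrite !(@RInt_const C_R_CompleteNormedModule). rewrite !scal_R_Cmult. rewrite !RtoC_minus. ring.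
  - intros y _. unfold A. unfold Cminus, Cplus, Copp, Cmult, RtoC. simpl. f_equal; ring.
  - intros x _. unfold A. unfold Ci, Cminus, Cplus, Copp, Cmult, RtoC. simpl. f_equal; ring.
  - apply CInt_minus; apply (ex_vseg_int A x0 x1 y0 y1); auto; lra.
  - apply CInt_minus; apply (ex_hseg_int A x0 x1 y0 y1); auto; lra.
Qed.

Lemma rect_int_affine_approx k al be x0 sx y0 sy M : 0 <= sx -> 0 <= sy ->
  cont_rect k x0 (x0 + sx) y0 (y0 + sy) ->
  (forall w, in_rect x0 (x0 + sx) y0 (y0 + sy) w -> Cmod (k w - (al + be * w))%C <= M) ->
  Cmod (rect_int k x0 (x0 + sx) y0 (y0 + sy)) <= 2 * (sx + sy) * M.
Proof.
  intros Hx Hy Hk HM.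
  replace (rect_int k x0 (x0 + sx) y0 (y0 + sy))
    with (rect_int (fun w => k w - (al + be * w))%C x0 (x0 + sx) y0 (y0 + sy)).
  - replace (2 * (sx + sy) * M) with (2 * (x0 + sx - x0) * M + 2 * (y0 + sy - y0) * M) by ring.
    apply rect_int_bound; try lra; auto.
    intros w Hw. apply ccont_minus; [apply Hk; auto|apply ccont_affine].
  - rewrite rect_int_minus, rect_int_affine; try lra; auto. ring. apply cont_rect_affine.
Qed.

Definition subrect_int k wx wy (c : R * R) n :=
  rect_int k (fst c) (fst c + wx / 2 ^ n) (snd c) (snd c + wy / 2 ^ n).

(** One step of Goursat's bisection: among the four quarters of the
    generation-[n] subrectangle with lower-left corner [c], keep one whose
    boundary integral is at least a quarter of the whole. *)
Definition quadrisect k wx wy n (c : R * R) : R * R :=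
  let hx := wx / 2 ^ (S n) in let hy := wy / 2 ^ (S n) in
  let I := Cmod (subrect_int k wx wy c n) in
  if Rle_dec I (4 * Cmod (subrect_int k wx wy c (S n))) then c
  else if Rle_dec I (4 * Cmod (subrect_int k wx wy (fst c + hx, snd c) (S n))) then (fst c + hx, snd c)
  else if Rle_dec I (4 * Cmod (subrect_int k wx wy (fst c, snd c + hy) (S n))) then (fst c, snd c + hy)
  else (fst c + hx, snd c + hy).

Fixpoint quadrisect_corner k x0 y0 wx wy n : R * R :=
  match n with O => (x0, y0) | S m => quadrisect k wx wy m (quadrisect_corner k x0 y0 wx wy m) end.

Lemma pow2_pos n : 0 < 2 ^ n.
Proof. apply pow_lt; lra. Qed.

Lemma div_pow2_S w n : w / 2 ^ n = w / 2 ^ (S n) + w / 2 ^ (S n).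
Proof. simpl. field. apply Rgt_not_eq, pow2_pos. Qed.

Lemma div_pow2_ge_0 w n : 0 <= w -> 0 <= w / 2 ^ n.
Proof. intros. apply Rmult_le_pos; auto. apply Rlt_le, Rinv_0_lt_compat, pow2_pos. Qed.

Lemma subrect_int_split4 k wx wy c n : 0 <= wx -> 0 <= wy ->
  cont_rect k (fst c) (fst c + wx / 2 ^ n) (snd c) (snd c + wy / 2 ^ n) ->
  subrect_int k wx wy c n = (subrect_int k wx wy c (S n) + subrect_int k wx wy ((fst c + wx / 2 ^ (S n))%R, snd c) (S n)
     + subrect_int k wx wy (fst c, (snd c + wy / 2 ^ (S n))%R) (S n)
     + subrect_int k wx wy ((fst c + wx / 2 ^ (S n))%R, (snd c + wy / 2 ^ (S n))%R) (S n))%C.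
Proof.
  intros Hx Hy H. unfold subrect_int. cbn [fst snd].
  set (hx := wx / 2 ^ (S n)) in *. set (hy := wy / 2 ^ (S n)) in *.
  assert (Ex : wx / 2 ^ n = hx + hx) by (unfold hx; apply div_pow2_S).
  assert (Ey : wy / 2 ^ n = hy + hy) by (unfold hy; apply div_pow2_S).
  assert (Px : 0 <= hx) by (apply div_pow2_ge_0; auto).
  assert (Py : 0 <= hy) by (apply div_pow2_ge_0; auto).
  rewrite Ex, Ey in *.
  replace (fst c + (hx + hx)) with (fst c + hx + hx) in * by ring.
  replace (snd c + (hy + hy)) with (snd c + hy + hy) in * by ring.
  rewrite (rect_int_split_x k (fst c) (fst c + hx) (fst c + hx + hx)); try lra; auto.
  rewrite (rect_int_split_y k (fst c) (fst c + hx) (snd c) (snd c + hy) (snd c + hy + hy)); try lra.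
  rewrite (rect_int_split_y k (fst c + hx) (fst c + hx + hx) (snd c) (snd c + hy) (snd c + hy + hy)); try lra.
  ring.
  apply (cont_rect_sub k (fst c) (fst c + hx + hx) (snd c) (snd c + hy + hy)); auto; lra.
  apply (cont_rect_sub k (fst c) (fst c + hx + hx) (snd c) (snd c + hy + hy)); auto; lra.
Qed.

Lemma quadrisect_spec k wx wy n c : 0 <= wx -> 0 <= wy ->
  cont_rect k (fst c) (fst c + wx / 2 ^ n) (snd c) (snd c + wy / 2 ^ n) ->
  let c' := quadrisect k wx wy n c in
  fst c <= fst c' /\ fst c' + wx / 2 ^ (S n) <= fst c + wx / 2 ^ n /\
  snd c <= snd c' /\ snd c' + wy / 2 ^ (S n) <= snd c + wy / 2 ^ n /\
  Cmod (subrect_int k wx wy c n) <= 4 * Cmod (subrect_int k wx wy c' (S n)).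
Proof.
  intros Hx Hy H c'.
  assert (Ex := div_pow2_S wx n). assert (Ey := div_pow2_S wy n).
  assert (Px := div_pow2_ge_0 wx (S n) Hx). assert (Py := div_pow2_ge_0 wy (S n) Hy).
  assert (Q := subrect_int_split4 k wx wy c n Hx Hy H).
  unfold c', quadrisect. cbv zeta.
  destruct (Rle_dec _ _) as [D1|D1]. { cbn [fst snd]. repeat split; try lra. }
  destruct (Rle_dec _ _) as [D2|D2]. { cbn [fst snd]. repeat split; try lra. }
  destruct (Rle_dec _ _) as [D3|D3]. { cbn [fst snd]. repeat split; try lra. }
  cbn [fst snd]. repeat split; try lra.
  rewrite Q in *.
  set (a1 := subrect_int k wx wy c (S n)) in *.
  set (a2 := subrect_int k wx wy (fst c + wx / 2 ^ S n, snd c) (S n)) in *.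
  set (a3 := subrect_int k wx wy (fst c, snd c + wy / 2 ^ S n) (S n)) in *.
  set (a4 := subrect_int k wx wy (fst c + wx / 2 ^ S n, snd c + wy / 2 ^ S n) (S n)) in *.
  assert (T := Cmod_triangle (a1 + a2 + a3) a4).
  assert (T2 := Cmod_triangle (a1 + a2) a3).
  assert (T3 := Cmod_triangle a1 a2).
  apply Rnot_le_lt in D1. apply Rnot_le_lt in D2. apply Rnot_le_lt in D3.
  lra.
Qed.

Lemma quadrisect_corner_spec k x0 y0 wx wy : 0 <= wx -> 0 <= wy -> cont_rect k x0 (x0 + wx) y0 (y0 + wy) ->
  forall n, let c := quadrisect_corner k x0 y0 wx wy n in
  x0 <= fst c /\ fst c + wx / 2 ^ n <= x0 + wx /\ y0 <= snd c /\ snd c + wy / 2 ^ n <= y0 + wy /\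
  Cmod (rect_int k x0 (x0 + wx) y0 (y0 + wy)) <= 4 ^ n * Cmod (subrect_int k wx wy c n).
Proof.
  intros Hx Hy H n. induction n as [|n IH].
  - simpl. unfold subrect_int. simpl. rewrite !Rdiv_1_r. repeat split; lra.
  - simpl quadrisect_corner. set (c := quadrisect_corner k x0 y0 wx wy n) in *. cbv zeta in IH |- *.
    destruct IH as [I1 [I2 [I3 [I4 I5]]]].
    assert (Hc : cont_rect k (fst c) (fst c + wx / 2 ^ n) (snd c) (snd c + wy / 2 ^ n)).
    { apply (cont_rect_sub k x0 (x0 + wx) y0 (y0 + wy)); auto. }
    destruct (quadrisect_spec k wx wy n c Hx Hy Hc) as [S1 [S2 [S3 [S4 S5]]]].
    repeat split; try lra.
    apply Rle_trans with (4 ^ n * Cmod (subrect_int k wx wy c n)); auto.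
    replace (4 ^ S n) with (4 ^ n * 4) by (simpl; ring). rewrite Rmult_assoc.
    apply Rmult_le_compat_l. apply pow_le; lra. auto.
Qed.

Lemma quadrisect_corner_mono k x0 y0 wx wy : 0 <= wx -> 0 <= wy -> cont_rect k x0 (x0 + wx) y0 (y0 + wy) ->
  forall m n, (m <= n)%nat ->
  fst (quadrisect_corner k x0 y0 wx wy m) <= fst (quadrisect_corner k x0 y0 wx wy n) /\
  fst (quadrisect_corner k x0 y0 wx wy n) + wx / 2 ^ n <= fst (quadrisect_corner k x0 y0 wx wy m) + wx / 2 ^ m /\
  snd (quadrisect_corner k x0 y0 wx wy m) <= snd (quadrisect_corner k x0 y0 wx wy n) /\
  snd (quadrisect_corner k x0 y0 wx wy n) + wy / 2 ^ n <= snd (quadrisect_corner k x0 y0 wx wy m) + wy / 2 ^ m.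
Proof.
  intros Hx Hy H m n Hmn. induction Hmn as [|n Hmn IH].
  - repeat split; lra.
  - destruct (quadrisect_corner_spec k x0 y0 wx wy Hx Hy H n) as [I1 [I2 [I3 [I4 _]]]].
    assert (Hc : cont_rect k (fst (quadrisect_corner k x0 y0 wx wy n)) (fst (quadrisect_corner k x0 y0 wx wy n) + wx / 2 ^ n)
                   (snd (quadrisect_corner k x0 y0 wx wy n)) (snd (quadrisect_corner k x0 y0 wx wy n) + wy / 2 ^ n)).
    { apply (cont_rect_sub k x0 (x0 + wx) y0 (y0 + wy)); auto. }
    destruct (quadrisect_spec k wx wy n _ Hx Hy Hc) as [S1 [S2 [S3 [S4 _]]]].
    simpl quadrisect_corner. lra.
Qed.

Lemma quadrisect_nested_point k x0 y0 wx wy : 0 <= wx -> 0 <= wy -> cont_rect k x0 (x0 + wx) y0 (y0 + wy) ->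
  exists xi eta, forall n, exists a b,
    x0 <= a /\ a + wx / 2 ^ n <= x0 + wx /\ y0 <= b /\ b + wy / 2 ^ n <= y0 + wy /\
    a <= xi <= a + wx / 2 ^ n /\ b <= eta <= b + wy / 2 ^ n /\
    Cmod (rect_int k x0 (x0 + wx) y0 (y0 + wy)) <= 4 ^ n * Cmod (rect_int k a (a + wx / 2 ^ n) b (b + wy / 2 ^ n)).
Proof.
  intros Hx Hy H.
  set (cr := quadrisect_corner k x0 y0 wx wy).
  assert (Inv := quadrisect_corner_spec k x0 y0 wx wy Hx Hy H).
  assert (Mo := quadrisect_corner_mono k x0 y0 wx wy Hx Hy H).
  assert (W : forall n, 0 <= wx / 2 ^ n) by (intros; apply div_pow2_ge_0; auto).
  assert (W' : forall n, 0 <= wy / 2 ^ n) by (intros; apply div_pow2_ge_0; auto).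
  destruct (completeness (fun r => exists n, r = fst (cr n))) as [xi [Ub Lub]].
  { exists (x0 + wx). intros r [n ->]. destruct (Inv n) as [I1 [I2 _]]. specialize (W n). unfold cr. lra. }
  { exists (fst (cr O)). exists O. auto. }
  destruct (completeness (fun r => exists n, r = snd (cr n))) as [eta [Ub' Lub']].
  { exists (y0 + wy). intros r [n ->]. destruct (Inv n) as [_ [_ [I3 [I4 _]]]]. specialize (W' n). unfold cr. lra. }
  { exists (snd (cr O)). exists O. auto. }
  exists xi, eta. intros n. exists (fst (cr n)), (snd (cr n)).
  destruct (Inv n) as [I1 [I2 [I3 [I4 I5]]]].
  repeat split; auto.
  - apply Ub. exists n; auto.
  - apply Lub. intros r [m ->]. destruct (Mo m (max m n) ltac:(lia)) as [M1 [M2 _]].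
    destruct (Mo n (max m n) ltac:(lia)) as [N1 [N2 _]]. specialize (W (max m n)). unfold cr. lra.
  - apply Ub'. exists n; auto.
  - apply Lub'. intros r [m ->]. destruct (Mo m (max m n) ltac:(lia)) as [_ [_ [M1 M2]]].
    destruct (Mo n (max m n) ltac:(lia)) as [_ [_ [N1 N2]]]. specialize (W' (max m n)). unfold cr. lra.
Qed.

Lemma exists_div_pow2_lt K del : 0 <= K -> 0 < del -> exists n, K / 2 ^ n < del.
Proof.
  intros HK Hd. destruct (archimed (K / del)) as [H1 _].
  assert (Hz : (0 <= up (K / del))%Z).
  { apply le_IZR. apply Rlt_le. apply Rle_lt_trans with (K / del); auto.
    apply Rmult_le_pos; auto. apply Rlt_le, Rinv_0_lt_compat; auto. }
  exists (Z.to_nat (up (K / del))).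
  assert (P : forall m, INR m < 2 ^ m).
  { induction m. simpl; lra. rewrite S_INR. simpl. assert (1 <= 2 ^ m) by (apply pow_R1_Rle; lra). lra. }
  specialize (P (Z.to_nat (up (K / del)))). rewrite INR_IZR_INZ, Z2Nat.id in P by auto.
  assert (Q := pow2_pos (Z.to_nat (up (K / del)))).
  apply Rmult_lt_reg_r with (2 ^ Z.to_nat (up (K / del))); auto.
  unfold Rdiv. rewrite Rmult_assoc, Rinv_l, Rmult_1_r by lra.
  apply Rmult_lt_reg_r with (/ del). apply Rinv_0_lt_compat; auto.
  replace (del * 2 ^ Z.to_nat (up (K * / del)) * / del) with (2 ^ Z.to_nat (up (K * / del))) by (field; lra).
  unfold Rdiv in H1, P. lra.
Qed.

Lemma pow4_pow2 n : 4 ^ n = 2 ^ n * 2 ^ n.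
Proof. rewrite <- Rpow_mult_distr. f_equal; ring. Qed.

Lemma in_rect_close a s b t p q w : a <= p <= a + s -> b <= q <= b + t -> in_rect a (a + s) b (b + t) w ->
  Cmod (w - (p, q))%C <= s + t.
Proof.
  intros Hp Hq [W1 W2]. eapply Rle_trans; [apply Cmod_le_sum|].
  unfold Cminus, Cplus, Copp; cbn [fst snd].
  apply Rplus_le_compat; apply Rabs_le; lra.
Qed.

Lemma goursat k x0 x1 y0 y1 : x0 <= x1 -> y0 <= y1 ->
  (forall w, in_rect x0 x1 y0 y1 w -> cdiff k w) -> rect_int k x0 x1 y0 y1 = c0.
Proof.
  intros Hx Hy Hd.
  assert (Hc : cont_rect k x0 x1 y0 y1) by (intros w Hw; apply cdiff_ccont, Hd, Hw).
  set (wx := x1 - x0) in *. set (wy := y1 - y0) in *.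
  assert (Wx : 0 <= wx) by (unfold wx; lra). assert (Wy : 0 <= wy) by (unfold wy; lra).
  assert (E1 : x1 = x0 + wx) by (unfold wx; ring). assert (E2 : y1 = y0 + wy) by (unfold wy; ring).
  clearbody wx wy. subst x1 y1.
  destruct (quadrisect_nested_point k x0 y0 wx wy Wx Wy Hc) as [xi [eta Hn]].
  assert (Hin : in_rect x0 (x0 + wx) y0 (y0 + wy) (xi, eta)).
  { destruct (Hn O) as [a [b [A1 [A2 [A3 [A4 [A5 [A6 _]]]]]]]]. simpl in *.
    rewrite !Rdiv_1_r in *. split; simpl; lra. }
  destruct (Hd _ Hin) as [d [phi [Ephi [P0 Cphi]]]].
  apply (small_bound_eq_0 _ 1 (2 * (wx + wy) ^ 2)); [lra|].
  intros eps [He _]. destruct (Cphi eps He) as [del [Hdel Hphi]].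
  destruct (exists_div_pow2_lt (wx + wy) del) as [n Hnd]; [lra|auto|].
  destruct (Hn n) as [a [b [A1 [A2 [A3 [A4 [A5 [A6 A7]]]]]]]].
  set (sx := wx / 2 ^ n) in *. set (sy := wy / 2 ^ n) in *.
  assert (Psx : 0 <= sx) by (apply div_pow2_ge_0; auto).
  assert (Psy : 0 <= sy) by (apply div_pow2_ge_0; auto).
  assert (Esum : (wx + wy) / 2 ^ n = sx + sy) by (unfold sx, sy; field; apply Rgt_not_eq, pow2_pos).
  (* on the small rectangle, [k] is within [eps (sx + sy)] of its tangent map at (xi, eta) *)
  assert (B : Cmod (rect_int k a (a + sx) b (b + sy)) <= 2 * (sx + sy) * (eps * (sx + sy))).
  { apply (rect_int_affine_approx k (k (xi, eta) - d * (xi, eta))%C d); auto.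
    - apply (cont_rect_sub k x0 (x0 + wx) y0 (y0 + wy)); auto; lra.
    - intros w Hw. assert (Cl := in_rect_close a sx b sy xi eta w ltac:(lra) ltac:(lra) Hw).
      set (h := (w - (xi, eta))%C) in *.
      replace w with ((xi, eta) + h)%C by (unfold h; ring). rewrite Ephi.
      replace (k (xi, eta) + phi h * h - (k (xi, eta) - d * (xi, eta) + d * ((xi, eta) + h)))%C
        with ((phi h - phi c0) * h)%C by (rewrite P0; ring).
      rewrite Cmod_mult. apply Rmult_le_compat; auto using Cmod_ge_0.
      apply Rlt_le, Hphi. replace (h - c0)%C with h by ring. lra. }
  eapply Rle_trans; [exact A7|].
  apply Rle_trans with (4 ^ n * (2 * (sx + sy) * (eps * (sx + sy)))).
  { apply Rmult_le_compat_l; auto. apply pow_le; lra. }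
  rewrite pow4_pow2. unfold sx, sy. right. field. apply Rgt_not_eq, pow2_pos.
Qed.

Lemma goursat_avoiding k x0 x1 y0 y1 w0 a1 a2 b1 b2 :
  x0 <= a1 -> a1 <= a2 -> a2 <= x1 -> y0 <= b1 -> b1 <= b2 -> b2 <= y1 ->
  (forall w, in_rect x0 x1 y0 y1 w -> w <> w0 -> cdiff k w) ->
  (a1 = a2 \/ b1 = b2 \/ ~ in_rect a1 a2 b1 b2 w0) -> rect_int k a1 a2 b1 b2 = c0.
Proof.
  intros H1 H2 H3 H4 H5 H6 Hd [E|[E|E]].
  - subst. apply rect_int_flat_x.
  - subst. apply rect_int_flat_y.
  - apply goursat; auto. intros w Hw. apply Hd. destruct Hw; split; lra.
    intro F. subst. auto.
Qed.

(** Cutting the rectangle along the lines at distance [e] from [(xi, eta)],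
    only the piece containing that point can contribute. *)
Lemma rect_int_localize k x0 x1 y0 y1 xi eta e : 0 < e ->
  x0 <= xi <= x1 -> y0 <= eta <= y1 -> cont_rect k x0 x1 y0 y1 ->
  (forall w, in_rect x0 x1 y0 y1 w -> w <> (xi, eta) -> cdiff k w) ->
  rect_int k x0 x1 y0 y1 =
  rect_int k (Rmax x0 (xi - e)) (Rmin x1 (xi + e)) (Rmax y0 (eta - e)) (Rmin y1 (eta + e)).
Proof.
  intros He [I1 I2] [I3 I4] Hc Hd.
  set (c1 := Rmax x0 (xi - e)). set (c2 := Rmin x1 (xi + e)).
  set (d1 := Rmax y0 (eta - e)). set (d2 := Rmin y1 (eta + e)).
  assert (C1 : x0 <= c1 <= xi) by (unfold c1, Rmax; destruct (Rle_dec _ _); lra).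
  assert (C2 : xi <= c2 <= x1) by (unfold c2, Rmin; destruct (Rle_dec _ _); lra).
  assert (D1 : y0 <= d1 <= eta) by (unfold d1, Rmax; destruct (Rle_dec _ _); lra).
  assert (D2 : eta <= d2 <= y1) by (unfold d2, Rmin; destruct (Rle_dec _ _); lra).
  assert (C1' : c1 = x0 \/ c1 = xi - e) by (unfold c1, Rmax; destruct (Rle_dec _ _); auto).
  assert (C2' : c2 = x1 \/ c2 = xi + e) by (unfold c2, Rmin; destruct (Rle_dec _ _); auto).
  assert (D1' : d1 = y0 \/ d1 = eta - e) by (unfold d1, Rmax; destruct (Rle_dec _ _); auto).
  assert (D2' : d2 = y1 \/ d2 = eta + e) by (unfold d2, Rmin; destruct (Rle_dec _ _); auto).
  rewrite (rect_int_split_x k x0 c1 x1) by (auto; lra).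
  rewrite (rect_int_split_x k c1 c2 x1) by (auto; try lra; apply (cont_rect_sub k x0 x1 y0 y1); auto; lra).
  rewrite (rect_int_split_y k c1 c2 y0 d1 y1) by (auto; try lra; apply (cont_rect_sub k x0 x1 y0 y1); auto; lra).
  rewrite (rect_int_split_y k c1 c2 d1 d2 y1) by (auto; try lra; apply (cont_rect_sub k x0 x1 y0 y1); auto; lra).
  rewrite (goursat_avoiding k x0 x1 y0 y1 (xi, eta) x0 c1 y0 y1); try lra; auto.
  2:{ destruct C1' as [E|E]; [left; auto|right; right; intros [[W1 W2] _]; simpl in W2; lra]. }
  rewrite (goursat_avoiding k x0 x1 y0 y1 (xi, eta) c2 x1 y0 y1); try lra; auto.
  2:{ destruct C2' as [E|E]; [left; auto|right; right; intros [[W1 W2] _]; simpl in W1; lra]. }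
  rewrite (goursat_avoiding k x0 x1 y0 y1 (xi, eta) c1 c2 y0 d1); try lra; auto.
  2:{ destruct D1' as [E|E]; [right; left; auto|right; right; intros [_ [W1 W2]]; simpl in W2; lra]. }
  rewrite (goursat_avoiding k x0 x1 y0 y1 (xi, eta) c1 c2 d2 y1); try lra; auto.
  2:{ destruct D2' as [E|E]; [right; left; auto|right; right; intros [_ [W1 W2]]; simpl in W1; lra]. }
  ring.
Qed.

Lemma goursat_punctured k x0 x1 y0 y1 w0 : x0 <= x1 -> y0 <= y1 -> cont_rect k x0 x1 y0 y1 ->
  (forall w, in_rect x0 x1 y0 y1 w -> w <> w0 -> cdiff k w) -> rect_int k x0 x1 y0 y1 = c0.
Proof.
  intros Hx Hy Hc Hd.
  destruct (classic (in_rect x0 x1 y0 y1 w0)) as [In|NIn].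
  2:{ apply goursat; auto. intros w Hw. apply Hd; auto. intro F; subst; auto. }
  destruct w0 as [xi eta]. destruct In as [[I1 I2] [I3 I4]]. simpl in I1, I2, I3, I4.
  destruct (ccont_bound k (xi, eta) (Hc (xi, eta) (conj (conj I1 I2) (conj I3 I4)))) as [d0 [Hd0 Hb]].
  apply (small_bound_eq_0 _ (d0 / 2) (8 * (Cmod (k (xi, eta)) + 1))); [lra|].
  intros e [He1 He2].
  rewrite (rect_int_localize k x0 x1 y0 y1 xi eta e) by (auto; lra).
  set (c1 := Rmax x0 (xi - e)). set (c2 := Rmin x1 (xi + e)).
  set (d1 := Rmax y0 (eta - e)). set (d2 := Rmin y1 (eta + e)).
  assert (C1 : x0 <= c1 /\ xi - e <= c1 <= xi) by (unfold c1; split; [apply Rmax_l|split; [apply Rmax_r|apply Rmax_lub; lra]]).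
  assert (C2 : c2 <= x1 /\ xi <= c2 <= xi + e) by (unfold c2; split; [apply Rmin_l|split; [apply Rmin_glb; lra|apply Rmin_r]]).
  assert (D1 : y0 <= d1 /\ eta - e <= d1 <= eta) by (unfold d1; split; [apply Rmax_l|split; [apply Rmax_r|apply Rmax_lub; lra]]).
  assert (D2 : d2 <= y1 /\ eta <= d2 <= eta + e) by (unfold d2; split; [apply Rmin_l|split; [apply Rmin_glb; lra|apply Rmin_r]]).
  eapply Rle_trans. apply (rect_int_bound k c1 c2 d1 d2 (Cmod (k (xi, eta)) + 1)); try lra.
  - apply (cont_rect_sub k x0 x1 y0 y1); auto; lra.
  - intros w [[W1 W2] [W3 W4]]. apply Hb.
    eapply Rle_lt_trans; [apply Cmod_le_sum|].
    unfold Cminus, Cplus, Copp; cbn [fst snd].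
    assert (Rabs (fst w + - xi) <= e) by (apply Rabs_le; lra).
    assert (Rabs (snd w + - eta) <= e) by (apply Rabs_le; lra). lra.
  - generalize (Cmod_ge_0 (k (xi, eta))). nra.
Qed.

Lemma goursat_isolated k x0 x1 y0 y1 : x0 <= x1 -> y0 <= y1 -> cont_rect k x0 x1 y0 y1 ->
  (forall w, in_rect x0 x1 y0 y1 w -> exists eta, 0 < eta /\
     forall w', in_rect x0 x1 y0 y1 w' -> w' <> w -> Cmod (w' - w)%C < eta -> cdiff k w') ->
  rect_int k x0 x1 y0 y1 = c0.
Proof.
  intros Hx Hy Hc Hd.
  set (wx := x1 - x0) in *. set (wy := y1 - y0) in *.
  assert (Wx : 0 <= wx) by (unfold wx; lra). assert (Wy : 0 <= wy) by (unfold wy; lra).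
  assert (E1 : x1 = x0 + wx) by (unfold wx; ring). assert (E2 : y1 = y0 + wy) by (unfold wy; ring).
  clearbody wx wy. subst x1 y1.
  destruct (quadrisect_nested_point k x0 y0 wx wy Wx Wy Hc) as [xi [eta Hn]].
  assert (Hin : in_rect x0 (x0 + wx) y0 (y0 + wy) (xi, eta)).
  { destruct (Hn O) as [a [b [A1 [A2 [A3 [A4 [A5 [A6 _]]]]]]]]. simpl in *.
    rewrite !Rdiv_1_r in *. split; simpl; lra. }
  destruct (Hd _ Hin) as [et [Het Hw]].
  destruct (exists_div_pow2_lt (wx + wy) et) as [n Hnd]; [lra|auto|].
  destruct (Hn n) as [a [b [A1 [A2 [A3 [A4 [A5 [A6 A7]]]]]]]].
  set (sx := wx / 2 ^ n) in *. set (sy := wy / 2 ^ n) in *.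
  assert (Psx : 0 <= sx) by (apply div_pow2_ge_0; auto).
  assert (Psy : 0 <= sy) by (apply div_pow2_ge_0; auto).
  assert (Esum : (wx + wy) / 2 ^ n = sx + sy) by (unfold sx, sy; field; apply Rgt_not_eq, pow2_pos).
  rewrite (goursat_punctured k a (a + sx) b (b + sy) (xi, eta)) in A7; try lra.
  - rewrite Cmod_0, Rmult_0_r in A7. apply Cmod_eq_0. generalize (Cmod_ge_0 (rect_int k x0 (x0 + wx) y0 (y0 + wy))). lra.
  - apply (cont_rect_sub k x0 (x0 + wx) y0 (y0 + wy)); auto; lra.
  - intros w Hw' Hne. apply Hw; auto.
    + destruct Hw' as [[W1 W2] [W3 W4]]. split; split; lra.
    + assert (Cl := in_rect_close a sx b sy xi eta w ltac:(lra) ltac:(lra) Hw'). lra.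
Qed.

(** * The mean value property *)

Lemma ccont_cexp w : ccont cexp w.
Proof. exact (cara_ccont _ _ _ (cara_cexp w)). Qed.

Lemma cara_translate_cexp (z0 : Cx) w : cara (fun w => z0 + cexp w)%C w (c0 + cexp w)%C.
Proof. apply cara_plus. apply cara_const. apply cara_cexp. Qed.

Lemma punctured_cdiff_comp_cexp H z0 R0 w : exp (fst w) < R0 ->
  (forall z, 0 < Cmod (z - z0)%C < R0 -> exists eta, 0 < eta /\
      forall z', z' <> z -> Cmod (z' - z)%C < eta -> cdiff H z') ->
  exists eta, 0 < eta /\
    forall w', w' <> w -> Cmod (w' - w)%C < eta -> cdiff (fun w => H (z0 + cexp w)%C) w'.
Proof.
  intros Hw Hl.
  assert (Hz : 0 < Cmod (z0 + cexp w - z0)%C < R0).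
  { replace (z0 + cexp w - z0)%C with (cexp w) by ring. rewrite Cmod_cexp. split; auto. apply exp_pos. }
  destruct (Hl _ Hz) as [eta [Heta Hl']].
  destruct (ccont_cexp w eta Heta) as [d1 [Hd1 Hd1']].
  exists (Rmin d1 1). split. apply Rmin_pos; lra.
  intros w' Hne Hd.
  destruct (Hl' (z0 + cexp w')%C) as [dH HdH].
  - intro F. apply Hne. apply cexp_inj_loc.
    apply (f_equal (fun x => x - z0)%C) in F. replace (z0 + cexp w' - z0)%C with (cexp w') in F by ring.
    replace (z0 + cexp w - z0)%C with (cexp w) in F by ring. auto.
    eapply Rlt_le_trans; [exact Hd|apply Rmin_r].
  - replace (z0 + cexp w' - (z0 + cexp w))%C with (cexp w' - cexp w)%C by ring.
    apply Hd1'. eapply Rlt_le_trans; [exact Hd|apply Rmin_l].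
  - exists (dH * (c0 + cexp w'))%C. apply (cara_comp H (fun w => z0 + cexp w)%C w').
    apply cara_translate_cexp. auto.
Qed.

Lemma circle_int_radius_indep H z0 R0 u0 u1 : 0 < R0 -> u0 <= u1 -> exp u1 < R0 ->
  (forall z, Cmod (z - z0)%C < R0 -> ccont H z) ->
  (forall z, 0 < Cmod (z - z0)%C < R0 -> exists eta, 0 < eta /\
      forall z', z' <> z -> Cmod (z' - z)%C < eta -> cdiff H z') ->
  CInt (fun t => H (z0 + cexp (u1, t))%C) 0 (2 * PI) = CInt (fun t => H (z0 + cexp (u0, t))%C) 0 (2 * PI).
Proof.
  intros HR Hu HuR Hc Hl.
  set (k := fun w => H (z0 + cexp w)%C).
  assert (PI2 := PI_RGT_0).
  assert (Ein : forall w, in_rect u0 u1 0 (2 * PI) w -> Cmod (z0 + cexp w - z0)%C < R0).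
  { intros w [[W1 W2] _]. replace (z0 + cexp w - z0)%C with (cexp w) by ring.
    rewrite Cmod_cexp. eapply Rle_lt_trans; [|exact HuR]. destruct (Req_dec (fst w) u1).
    rewrite H0; lra. apply Rlt_le, exp_increasing; lra. }
  assert (Hk : cont_rect k u0 u1 0 (2 * PI)).
  { intros w Hw. unfold k. apply (ccont_comp H (fun w => z0 + cexp w)%C).
    apply ccont_plus. apply ccont_const. apply ccont_cexp. apply Hc. auto. }
  (* Goursat for [H (z0 + e^w)] on the rectangle [u0, u1] x [0, 2 pi]; its
     horizontal sides cancel by periodicity, leaving the two circle integrals. *)
  assert (Z : rect_int k u0 u1 0 (2 * PI) = c0).
  { apply goursat_isolated; auto; try lra. intros w Hw.
    assert (Hw' : exp (fst w) < R0).
    { specialize (Ein w Hw). replace (z0 + cexp w - z0)%C with (cexp w) in Ein by ring.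
      rewrite Cmod_cexp in Ein. exact Ein. }
    destruct (punctured_cdiff_comp_cexp H z0 R0 w Hw' Hl) as [eta [Heta Hd]].
    exists eta. split; auto. }
  unfold rect_int, hseg_int, vseg_int in Z.
  rewrite (@RInt_ext C_R_CompleteNormedModule (fun x => k (x, 2 * PI)) (fun x => k (x, 0))) in Z.
  2:{ intros x _. unfold k. rewrite cexp_2pi. auto. }
  assert (E : (Ci * (CInt (fun y => k (u1, y)) 0 (2 * PI) - CInt (fun y => k (u0, y)) 0 (2 * PI)))%C = c0).
  { rewrite <- Z. ring. }
  assert (E2 : (CInt (fun y => k (u1, y)) 0 (2 * PI) - CInt (fun y => k (u0, y)) 0 (2 * PI))%C = c0).
  { replace (CInt (fun y => k (u1, y)) 0 (2 * PI) - CInt (fun y => k (u0, y)) 0 (2 * PI))%C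
      with (- Ci * (Ci * (CInt (fun y => k (u1, y)) 0 (2 * PI) - CInt (fun y => k (u0, y)) 0 (2 * PI))))%C.
    rewrite E. ring. unfold Ci. apply injective_projections; simpl; ring. }
  change (CInt (fun t => k (u1, t)) 0 (2 * PI) = CInt (fun t => k (u0, t)) 0 (2 * PI)).
  apply Ceq_minus. exact E2.
Qed.

Lemma ex_circle_int H z0 R0 u : exp u < R0 -> (forall z, Cmod (z - z0)%C < R0 -> ccont H z) ->
  exCInt (fun t => H (z0 + cexp (u, t))%C) 0 (2 * PI).
Proof.
  intros Hu Hc. assert (PI2 := PI_RGT_0).
  apply (ex_vseg_int (fun w => H (z0 + cexp w)%C) u u 0 (2 * PI) u); try lra.
  intros w [[W1 W2] _]. apply (ccont_comp H (fun w => z0 + cexp w)%C).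
  apply ccont_plus. apply ccont_const. apply ccont_cexp. apply Hc.
  replace (z0 + cexp w - z0)%C with (cexp w) by ring. rewrite Cmod_cexp.
  replace (fst w) with u by lra. auto.
Qed.

Lemma mean_value H z0 R0 : 0 < R0 ->
  (forall z, Cmod (z - z0)%C < R0 -> ccont H z) ->
  (forall z, 0 < Cmod (z - z0)%C < R0 -> exists eta, 0 < eta /\
      forall z', z' <> z -> Cmod (z' - z)%C < eta -> cdiff H z') ->
  forall r, 0 < r < R0 -> CInt (fun t => H (z0 + cexp (ln r, t))%C) 0 (2 * PI) = (RtoC (2 * PI) * H z0)%C.
Proof.
  intros HR Hc Hl r Hr. assert (PI2 := PI_RGT_0).
  apply Ceq_minus. apply (small_bound_eq_0 _ 1 (2 * PI)); [lra|].
  intros eps [He _].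
  assert (Hz0 : Cmod (z0 - z0)%C < R0) by (replace (z0 - z0)%C with c0 by ring; rewrite Cmod_0; lra).
  destruct (Hc z0 Hz0 eps He) as [d [Hd Hd']].
  set (r' := Rmin (r / 2) (d / 2)).
  assert (Pr' : 0 < r') by (apply Rmin_pos; lra).
  assert (r'r : r' <= r) by (unfold r'; generalize (Rmin_l (r/2) (d/2)); lra).
  assert (r'd : r' < d) by (unfold r'; generalize (Rmin_r (r/2) (d/2)); lra).
  (* replace the circle of radius [r] by one of radius [r' < d] *)
  rewrite (circle_int_radius_indep H z0 R0 (ln r') (ln r)); auto.
  2:{ destruct (Req_dec r' r) as [E|E]. rewrite E; lra. apply Rlt_le, ln_increasing; lra. }
  2:{ rewrite exp_ln; lra. }
  replace (RtoC (2 * PI) * H z0)%C with (CInt (fun _ => H z0) 0 (2 * PI)).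
  2:{ rewrite (@RInt_const C_R_CompleteNormedModule). rewrite scal_R_Cmult. f_equal. f_equal. ring. }
  rewrite <- CInt_minus.
  2:{ apply (ex_circle_int H z0 R0). rewrite exp_ln; lra. auto. }
  2:{ apply (@ex_RInt_const C_R_NormedModule). }
  replace (2 * PI * eps) with ((2 * PI - 0) * eps) by ring.
  apply CInt_bound. lra.
  { apply (@ex_RInt_minus C_R_NormedModule). apply (ex_circle_int H z0 R0). rewrite exp_ln; lra. auto.
    apply (@ex_RInt_const C_R_NormedModule). }
  intros t Ht. apply Rlt_le, Hd'. replace (z0 + cexp (ln r', t) - z0)%C with (cexp (ln r', t)) by ring.
  rewrite Cmod_cexp. simpl. rewrite exp_ln; lra.
Qed.

(** * Möbius maps *)

Lemma Cmod_mobius_denom_sq (a z : Cx) : (Cmod (c1 - Cconj a * z)%C) ^ 2 = (Cmod (z - a)%C) ^ 2 + (1 - Cmod a ^ 2) * (1 - Cmod z ^ 2).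
Proof. rewrite !Cmod2_alt. destruct a, z. simpl. ring. Qed.

Definition mobius (a z : Cx) : Cx := ((z - a) / (c1 - Cconj a * z))%C.

Lemma mobius_denom_bound a z : Cmod a < 1 -> Cmod z < 1 ->
  0 < 1 - Cmod a * Cmod z <= Cmod (c1 - Cconj a * z)%C.
Proof.
  intros Ha Hz. assert (Pa := Cmod_ge_0 a). assert (Pz := Cmod_ge_0 z). split. nra.
  assert (T := Cmod_triangle_sub c1 (Cconj a * z)%C). rewrite Cmod_mult, Cmod_conj in T.
  rewrite Cmod_1 in T. lra.
Qed.

Lemma mobius_denom_neq0 a z : Cmod a < 1 -> Cmod z < 1 -> (c1 - Cconj a * z)%C <> c0.
Proof.
  intros Ha Hz F. assert (D := mobius_denom_bound a z Ha Hz). rewrite F, Cmod_0 in D. lra.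
Qed.

Lemma Cmod_mobius_lt_1 a z : Cmod a < 1 -> Cmod z < 1 -> Cmod (mobius a z) < 1.
Proof.
  intros Ha Hz. unfold mobius. assert (D := mobius_denom_bound a z Ha Hz).
  rewrite Cmod_div by (apply mobius_denom_neq0; auto).
  assert (I := Cmod_mobius_denom_sq a z).
  assert (Pa := Cmod_ge_0 a). assert (Pz := Cmod_ge_0 z).
  assert (Q : 0 < (1 - Cmod a ^ 2) * (1 - Cmod z ^ 2)).
  { apply Rmult_lt_0_compat; nra. }
  assert (L : Cmod (z - a)%C < Cmod (c1 - Cconj a * z)%C).
  { assert (P1 := Cmod_ge_0 (z - a)%C). nra. }
  apply Rmult_lt_reg_r with (Cmod (c1 - Cconj a * z)%C). lra.
  unfold Rdiv. rewrite Rmult_assoc, Rinv_l, Rmult_1_r by lra. lra.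
Qed.

Lemma cdiff_mobius a u : (c1 - Cconj a * u)%C <> c0 -> cdiff (mobius a) u.
Proof.
  intros H. unfold mobius. apply cdiff_div; auto.
  apply cdiff_minus. apply cdiff_id. apply cdiff_const.
  apply cdiff_minus. apply cdiff_const. apply cdiff_mult. apply cdiff_const. apply cdiff_id.
Qed.

Lemma mobius_self a : mobius a a = c0.
Proof. unfold mobius. replace (a - a)%C with c0 by ring. unfold Cdiv. ring. Qed.

Lemma C1_neq_C0 : c1 <> c0.
Proof. intro F. injection F as F. lra. Qed.

Lemma mobius_opp_0 w : mobius (- w)%C c0 = w.
Proof. unfold mobius. rewrite Copp_conj. replace (c1 - - Cconj w * c0)%C with c1 by ring.
  replace (c0 - - w)%C with w by ring. field; try apply C1_neq_C0.
Qed.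

Lemma mobius_0 a : mobius a c0 = (- a)%C.
Proof. unfold mobius. replace (c1 - Cconj a * c0)%C with c1 by ring. field; try apply C1_neq_C0. Qed.

Lemma mobius_opp_mobius a z : Cmod a < 1 -> Cmod z < 1 -> mobius (- a)%C (mobius a z) = z.
Proof.
  intros Ha Hz. assert (D := mobius_denom_neq0 a z Ha Hz). assert (D2 := mobius_denom_neq0 a a Ha Ha).
  unfold mobius. rewrite Copp_conj. field. split; auto.
  replace (c1 - Cconj a * z - - Cconj a * (z - a))%C with (c1 - Cconj a * a)%C by ring. auto.
Qed.

Lemma two_point_interpolation w1 w2 a b : Cmod w1 < 1 -> Cmod w2 < 1 -> Cmod a < 1 -> Cmod b < 1 ->
  Cmod (mobius w1 w2) < Cmod (mobius a b) ->
  exists phi, (forall z, Cmod z < 1 -> cdiff phi z) /\ (forall z, Cmod z < 1 -> Cmod (phi z) < 1) /\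
    phi a = w1 /\ phi b = w2.
Proof.
  intros H1 H2 Ha Hb Hlt.
  assert (Nz : mobius a b <> c0). { intro F. rewrite F, Cmod_0 in Hlt. generalize (Cmod_ge_0 (mobius w1 w2)). lra. }
  set (c := (mobius w1 w2 / mobius a b)%C).
  assert (Hc : Cmod c < 1).
  { unfold c. rewrite Cmod_div by auto. assert (P := proj1 (Cmod_gt_0 _) Nz).
    apply Rmult_lt_reg_r with (Cmod (mobius a b)); auto. unfold Rdiv. rewrite Rmult_assoc, Rinv_l by lra. lra. }
  assert (Hu : forall z, Cmod z < 1 -> Cmod (c * mobius a z)%C < 1).
  { intros z Hz. rewrite Cmod_mult. assert (M := Cmod_mobius_lt_1 a z Ha Hz).
    generalize (Cmod_ge_0 c) (Cmod_ge_0 (mobius a z)). intros. nra. }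
  assert (Hw : Cmod (- w1)%C < 1) by (rewrite Cmod_opp; auto).
  exists (fun z => mobius (- w1)%C (c * mobius a z)%C). split; [|split; [|split]].
  - intros z Hz. apply (cdiff_comp (mobius (- w1)%C) (fun z => c * mobius a z)%C).
    apply cdiff_mult. apply cdiff_const. apply cdiff_mobius. apply mobius_denom_neq0; auto.
    apply cdiff_mobius. apply mobius_denom_neq0; auto.
  - intros z Hz. apply Cmod_mobius_lt_1; auto.
  - simpl. rewrite mobius_self. replace (c * c0)%C with c0 by ring. apply mobius_opp_0.
  - simpl. replace (c * mobius a b)%C with (mobius w1 w2) by (unfold c; field; auto). apply mobius_opp_mobius; auto.
Qed.

(** On the circle [|z| = r] the Blaschke factor [(z - a) / (1 - conj a z)] has
    modulus close to 1 when [r] is close to 1, by the identity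
    [Cmod_mobius_denom_sq]. *)
Lemma mobius_denom_bound_circle (a z : Cx) r m : Cmod a <= m -> m < 1 -> (1 + m) / 2 <= r -> r < 1 -> Cmod z = r ->
  Cmod (c1 - Cconj a * z)%C <= (1 + 4 * (1 - r ^ 2) / (1 - m) ^ 2) * Cmod (z - a)%C.
Proof.
  intros Ha Hm Hr1 Hr2 Hz.
  assert (Pa := Cmod_ge_0 a).
  assert (Dz : r - m <= Cmod (z - a)%C) by (assert (T := Cmod_triangle_sub z a); lra).
  assert (Dm : (1 - m) / 2 <= r - m) by lra.
  set (K := 4 * (1 - r ^ 2) / (1 - m) ^ 2).
  assert (PK : 0 <= K) by (unfold K; apply Rmult_le_pos; [nra|apply Rlt_le, Rinv_0_lt_compat; nra]).
  set (D := Cmod (z - a)%C) in *.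
  assert (PD : 0 < D) by lra.
  assert (I := Cmod_mobius_denom_sq a z). fold D in I. rewrite Hz in I.
  enough (Cmod (c1 - Cconj a * z)%C ^ 2 <= ((1 + K) * D) ^ 2)
    by (generalize (Cmod_ge_0 (c1 - Cconj a * z)%C); intros; assert (0 <= (1 + K) * D) by nra; nra).
  rewrite I.
  assert (Q : (1 - Cmod a ^ 2) * (1 - r ^ 2) <= K * D ^ 2).
  { unfold K. assert (Hd2 : ((1 - m) / 2) ^ 2 <= D ^ 2) by nra.
    assert (1 - Cmod a ^ 2 <= 1) by nra.
    assert (0 <= 1 - r ^ 2) by nra.
    apply Rle_trans with (1 - r ^ 2). nra.
    replace (4 * (1 - r ^ 2) / (1 - m) ^ 2 * D ^ 2) with ((1 - r ^ 2) * (D ^ 2 / ((1 - m) / 2) ^ 2)) by (field; lra).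
    rewrite <- (Rmult_1_r (1 - r ^ 2)) at 1. apply Rmult_le_compat_l; auto.
    apply Rmult_le_reg_r with (((1 - m) / 2) ^ 2). nra. field_simplify; nra. }
  nra.
Qed.

(** * The Schwarz lemma with two zeros *)

Lemma cara_root_quotient g a phi : (forall z, Cmod z < 1 -> cdiff g z) -> Cmod a < 1 ->
  (forall h, g (a + h)%C = (g a + phi h * h)%C) -> g a = c0 -> ccont phi c0 ->
  (forall z, g z = (phi (z - a) * (z - a))%C) /\
  (forall z, Cmod z < 1 -> ccont (fun w => phi (w - a)%C) z) /\
  (forall z, Cmod z < 1 -> z <> a -> cdiff (fun w => phi (w - a)%C) z).
Proof.
  intros Hg Ha E Z C.
  assert (E' : forall z, g z = (phi (z - a) * (z - a))%C).
  { intros z. replace (g z) with (g (a + (z - a))%C) by (f_equal; ring). rewrite E, Z. ring. }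
  assert (D : forall z, Cmod z < 1 -> z <> a -> cdiff (fun w => phi (w - a)%C) z).
  { intros z Hz Hne.
    assert (Pd : 0 < Cmod (z - a)%C) by (apply Cmod_gt_0; intro F; apply Hne; apply Ceq_minus; auto).
    destruct (cdiff_div g (fun w => w - a)%C z) as [d Hd].
    - apply Hg; auto.
    - apply cdiff_minus. apply cdiff_id. apply cdiff_const.
    - intro F. apply Hne. apply Ceq_minus. auto.
    - exists d. apply (cara_local_ext _ (fun w => (g w / (w - a))%C) z d (Cmod (z - a)%C) Pd); auto.
      intros w Hw. rewrite E'. field. intro F.
      assert (w = a) by (apply Ceq_minus; auto). subst w.
      rewrite Cmod_minus_sym in Hw. lra. }
  split; auto. split; auto.
  intros z Hz. destruct (Ceq_dec z a) as [->|Hne].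
  - apply (ccont_comp phi (fun w => w - a)%C). apply ccont_minus. apply ccont_id. apply ccont_const.
    replace (a - a)%C with c0 by ring. auto.
  - apply cdiff_ccont. apply D; auto.
Qed.

Lemma le_1_of_bound_near_1 (x m : R) : 0 <= m < 1 ->
  (forall t, 0 < t -> t <= (1 - m) / 2 -> x <= (1 + 8 * t / (1 - m) ^ 2) ^ 2) -> x <= 1.
Proof.
  intros Hm H. destruct (Rle_dec x 1) as [L|L]; auto. exfalso.
  set (q := (1 - m) ^ 2). assert (Pq : 0 < q) by (unfold q; nra).
  assert (q <= 1) by (unfold q; nra).
  set (t := Rmin ((1 - m) / 2) (Rmin ((x - 1) * q / 48) (q / 8))).
  assert (Pt : 0 < t) by (apply Rmin_pos; [lra|]; apply Rmin_pos; apply Rdiv_lt_0_compat; nra).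
  assert (T1 : t <= (1 - m) / 2) by apply Rmin_l.
  assert (T2 : t <= (x - 1) * q / 48) by (eapply Rle_trans; [apply Rmin_r|apply Rmin_l]).
  assert (T3 : t <= q / 8) by (eapply Rle_trans; [apply Rmin_r|apply Rmin_r]).
  specialize (H t Pt T1). fold q in H.
  set (u := 8 * t / q) in *.
  assert (Pu : 0 < u) by (unfold u; apply Rdiv_lt_0_compat; lra).
  assert (U : u <= (x - 1) / 6).
  { unfold u. apply Rmult_le_reg_r with q; auto. unfold Rdiv at 1. rewrite Rmult_assoc, Rinv_l, Rmult_1_r by lra. nra. }
  assert (U1 : u <= 1).
  { unfold u. apply Rmult_le_reg_r with q; auto. unfold Rdiv at 1. rewrite Rmult_assoc, Rinv_l, Rmult_1_r by lra.
    lra. }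
  nra.
Qed.

Lemma punctured_cdiff_off2 H a b :
  (forall z, Cmod z < 1 -> z <> a -> z <> b -> cdiff H z) ->
  forall z, Cmod z < 1 -> exists eta, 0 < eta /\
    forall z', z' <> z -> Cmod (z' - z)%C < eta -> cdiff H z'.
Proof.
  intros HD z Hz.
  (* a radius avoiding whichever of [a], [b] differs from [z] *)
  set (ea := if Ceq_dec z a then 1 else Cmod (z - a)%C).
  set (eb := if Ceq_dec z b then 1 else Cmod (z - b)%C).
  assert (Pea : 0 < ea).
  { unfold ea. destruct (Ceq_dec z a) as [_|n]; [lra|]. apply Cmod_gt_0. intro F; apply n; apply Ceq_minus; auto. }
  assert (Peb : 0 < eb).
  { unfold eb. destruct (Ceq_dec z b) as [_|n]; [lra|]. apply Cmod_gt_0. intro F; apply n; apply Ceq_minus; auto. }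
  exists (Rmin (1 - Cmod z) (Rmin ea eb)). split. repeat apply Rmin_pos; lra.
  intros z' Hne Hd.
  assert (D1 : Cmod (z' - z)%C < 1 - Cmod z) by (eapply Rlt_le_trans; [exact Hd|apply Rmin_l]).
  assert (D2 : Cmod (z' - z)%C < ea) by (eapply Rlt_le_trans; [exact Hd|]; eapply Rle_trans; [apply Rmin_r|apply Rmin_l]).
  assert (D3 : Cmod (z' - z)%C < eb) by (eapply Rlt_le_trans; [exact Hd|]; eapply Rle_trans; [apply Rmin_r|apply Rmin_r]).
  apply HD.
  - assert (T := Cmod_triangle (z' - z) z). replace (z' - z + z)%C with z' in T by ring. lra.
  - intro F. subst z'. unfold ea in D2. destruct (Ceq_dec z a) as [E|E]; [subst; auto|].
    rewrite Cmod_minus_sym in D2. lra.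
  - intro F. subst z'. unfold eb in D3. destruct (Ceq_dec z b) as [E|E]; [subst; auto|].
    rewrite Cmod_minus_sym in D3. lra.
Qed.

Lemma Cmod_center_le H r M : 0 < r < 1 ->
  (forall z, Cmod z < 1 -> ccont H z) ->
  (forall z, Cmod z < 1 -> exists eta, 0 < eta /\
      forall z', z' <> z -> Cmod (z' - z)%C < eta -> cdiff H z') ->
  (forall z, Cmod z = r -> Cmod (H z) <= M) -> Cmod (H c0) <= M.
Proof.
  intros Hr HC HD HM. assert (PI2 := PI_RGT_0).
  assert (Hc0 : forall z, Cmod (z - c0)%C < 1 -> ccont H z).
  { intros z Hz. apply HC. replace (z - c0)%C with z in Hz by ring. auto. }
  assert (HD0 : forall z, 0 < Cmod (z - c0)%C < 1 -> exists eta, 0 < eta /\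
      forall z', z' <> z -> Cmod (z' - z)%C < eta -> cdiff H z').
  { intros z [_ Hz]. replace (z - c0)%C with z in Hz by ring. apply HD; auto. }
  assert (Bd : Cmod (CInt (fun t => H (c0 + cexp (ln r, t))%C) 0 (2 * PI)) <= (2 * PI - 0) * M).
  { apply CInt_bound; [lra|apply (ex_circle_int H c0 1); auto; rewrite exp_ln; lra|].
    intros t _. apply HM. replace (c0 + cexp (ln r, t))%C with (cexp (ln r, t)) by ring.
    rewrite Cmod_cexp. simpl. apply exp_ln. lra. }
  rewrite (mean_value H c0 1 Rlt_0_1 Hc0 HD0 r Hr), Cmod_mult, Cmod_R, Rabs_right in Bd by lra.
  apply Rmult_le_reg_l with (2 * PI); lra.
Qed.

Section SchwarzTwoZeros.

Variables (g : Cx -> Cx) (a b : Cx).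
Hypotheses (Hg : forall z, Cmod z < 1 -> cdiff g z) (Ha : Cmod a < 1) (Hb : Cmod b < 1)
  (Hab : a <> b) (Ga : g a = c0) (Gb : g b = c0).

Let blaschke_denom z := ((c1 - Cconj a * z) * (c1 - Cconj b * z))%C.

Lemma divide_by_blaschke2 : exists H,
  (forall z, (H z * ((z - a) * (z - b)))%C = (g z * blaschke_denom z)%C) /\
  (forall z, Cmod z < 1 -> ccont H z) /\
  (forall z, Cmod z < 1 -> z <> a -> z <> b -> cdiff H z).
Proof.
  destruct (Hg a Ha) as [da [pa [Epa [Pa Ca]]]].
  destruct (Hg b Hb) as [db [pb [Epb [Pb Cb]]]].
  destruct (cara_root_quotient g a pa Hg Ha Epa Ga Ca) as [Qa1 [Qa2 Qa3]].
  destruct (cara_root_quotient g b pb Hg Hb Epb Gb Cb) as [Qb1 [Qb2 Qb3]].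
  set (qa := fun w => pa (w - a)%C) in *. set (qb := fun w => pb (w - b)%C) in *.
  assert (Hab' : (a - b)%C <> c0) by (intro F; apply Hab; apply Ceq_minus; auto).
  (* partial fractions: g / ((z - a) (z - b)) = (qa - qb) / (a - b) *)
  exists (fun z => ((qa z - qb z) / (a - b) * blaschke_denom z)%C). split; [|split].
  - intros z.
    transitivity (((qa z * (z - a)) * (z - b) - (qb z * (z - b)) * (z - a)) / (a - b) * blaschke_denom z)%C.
    field; auto.
    unfold qa, qb. cbv beta. rewrite <- Qa1, <- Qb1. field; auto.
  - intros z Hz. unfold blaschke_denom. apply ccont_mult. apply ccont_mult. apply ccont_minus; auto.
    apply ccont_const. apply ccont_mult; apply ccont_minus; try apply ccont_const;
    apply ccont_mult; try apply ccont_const; apply ccont_id.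
  - intros z Hz Hza Hzb. unfold blaschke_denom. apply cdiff_mult. apply cdiff_mult. apply cdiff_minus; auto.
    apply cdiff_const. apply cdiff_mult; apply cdiff_minus; try apply cdiff_const;
    apply cdiff_mult; try apply cdiff_const; apply cdiff_id.
Qed.

Hypothesis (Hg1 : forall z, Cmod z < 1 -> Cmod (g z) <= 1).

Lemma blaschke_quotient_circle_bound H m r z :
  (forall z, (H z * ((z - a) * (z - b)))%C = (g z * blaschke_denom z)%C) ->
  Cmod a <= m -> Cmod b <= m -> m < 1 -> (1 + m) / 2 <= r -> r < 1 -> Cmod z = r ->
  Cmod (H z) <= (1 + 4 * (1 - r ^ 2) / (1 - m) ^ 2) ^ 2.
Proof.
  intros HH Ham Hbm Hm1 Hr1 Hr2 Hz.
  assert (Hm0 : 0 <= m) by (generalize (Cmod_ge_0 a); lra).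
  set (Q := 1 + 4 * (1 - r ^ 2) / (1 - m) ^ 2).
  assert (PQ : 1 <= Q).
  { unfold Q. assert (0 <= 4 * (1 - r ^ 2) / (1 - m) ^ 2); [|lra].
    apply Rmult_le_pos; [nra|apply Rlt_le, Rinv_0_lt_compat; nra]. }
  assert (PA : 0 < Cmod (z - a)%C) by (generalize (Cmod_triangle_sub z a); lra).
  assert (PB : 0 < Cmod (z - b)%C) by (generalize (Cmod_triangle_sub z b); lra).
  assert (X1 := mobius_denom_bound_circle a z r m Ham Hm1 Hr1 Hr2 Hz). fold Q in X1.
  assert (X2 := mobius_denom_bound_circle b z r m Hbm Hm1 Hr1 Hr2 Hz). fold Q in X2.
  assert (G1 : Cmod (g z) <= 1) by (apply Hg1; lra).
  assert (E := f_equal Cmod (HH z)). unfold blaschke_denom in E. rewrite !Cmod_mult in E.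
  assert (G0 := Cmod_ge_0 (g z)).
  assert (Y : Cmod (H z) * (Cmod (z - a)%C * Cmod (z - b)%C) <= Q ^ 2 * (Cmod (z - a)%C * Cmod (z - b)%C)).
  { rewrite E. generalize (Cmod_ge_0 (c1 - Cconj a * z)%C) (Cmod_ge_0 (c1 - Cconj b * z)%C). intros.
    apply Rle_trans with (1 * (Q * Cmod (z - a)%C * (Q * Cmod (z - b)%C))).
    apply Rmult_le_compat; try lra. apply Rmult_le_pos; auto. apply Rmult_le_compat; auto.
    right; ring. }
  apply Rmult_le_reg_r with (Cmod (z - a)%C * Cmod (z - b)%C). nra. auto.
Qed.

Lemma schwarz_two_zeros : Cmod (g c0) <= Cmod a * Cmod b.
Proof.
  destruct (divide_by_blaschke2) as [H [HH [HC HD]]].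
  set (m := Rmax (Cmod a) (Cmod b)).
  assert (Hm0 : 0 <= m) by (unfold m; eapply Rle_trans; [apply Cmod_ge_0|apply Rmax_l]).
  assert (Hm1 : m < 1) by (unfold m; apply Rmax_lub_lt; auto).
  assert (Ham : Cmod a <= m) by apply Rmax_l. assert (Hbm : Cmod b <= m) by apply Rmax_r.
  (* on circles of radius r -> 1 the bound on |H| tends to 1 *)
  assert (H0le : Cmod (H c0) <= 1).
  { apply (le_1_of_bound_near_1 _ m). lra. intros t Pt Tt.
    apply (Cmod_center_le H (1 - t)); auto; try lra.
    - intros z Hz. apply (punctured_cdiff_off2 H a b); auto.
    - intros z Hz. eapply Rle_trans.
      apply (blaschke_quotient_circle_bound H m (1 - t) z); auto; lra.
      apply pow_incr. split.
      + assert (0 <= 4 * (1 - (1 - t) ^ 2) / (1 - m) ^ 2); [|lra].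
        apply Rmult_le_pos; [nra|apply Rlt_le, Rinv_0_lt_compat; nra].
      + apply Rplus_le_compat_l. unfold Rdiv. apply Rmult_le_compat_r.
        apply Rlt_le, Rinv_0_lt_compat. nra. nra. }
  assert (E0 := HH c0). unfold blaschke_denom in E0.
  replace (c1 - Cconj a * c0)%C with c1 in E0 by ring. replace (c1 - Cconj b * c0)%C with c1 in E0 by ring.
  replace (g c0) with (H c0 * a * b)%C.
  - rewrite !Cmod_mult. generalize (Cmod_ge_0 a) (Cmod_ge_0 b) (Cmod_ge_0 (H c0)). intros.
    assert (0 <= Cmod a * Cmod b) by (apply Rmult_le_pos; auto). nra.
  - rewrite <- (Cmult_1_r (g c0)). replace (c1 * c1)%C with c1 in E0 by ring. rewrite <- E0. ring.
Qed.

End SchwarzTwoZeros.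

(** * Holomorphy on the disc and the bidisc *)

Lemma Defs_Cmod : Defs.Cmod = Complex.Cmod. Proof. reflexivity. Qed.
Lemma Defs_Cdiv : Defs.Cdiv = Complex.Cdiv. Proof. reflexivity. Qed.
Lemma Defs_Csub : Defs.Csub = Cminus. Proof. reflexivity. Qed.
Lemma Defs_Cmul : Defs.Cmul = Cmult. Proof. reflexivity. Qed.
Lemma Defs_Cadd : Defs.Cadd = Cplus. Proof. reflexivity. Qed.
Lemma Defs_Cconj : Defs.Cconj = Complex.Cconj. Proof. reflexivity. Qed.
Lemma Defs_C1 : Defs.C1 = c1. Proof. reflexivity. Qed.
Lemma Defs_C0 : Defs.C0 = c0. Proof. reflexivity. Qed.

(** The derivative condition of [holo_disc], written with Coquelicot's operations. *)
Definition holo_deriv (f : Cx -> Cx) (z d : Cx) : Prop :=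
  forall eps, 0 < eps -> exists del, 0 < del /\ forall h, Cmod (z + h)%C < 1 ->
    Cmod h < del -> Cmod (f (z + h) - f z - d * h)%C <= eps * Cmod h.

Lemma cdiff_of_holo_deriv f z d : Cmod z < 1 -> holo_deriv f z d -> cdiff f z.
Proof.
  intros Hz H. exists d.
  set (psi := fun h => if Ceq_dec h c0 then d else ((f (z + h) - f z) / h)%C).
  apply (cara_local f z d psi (1 - Cmod z)); [lra| | |].
  - intros h Hh _. unfold psi. destruct (Ceq_dec h c0); [tauto|]. field. auto.
  - unfold psi. destruct (Ceq_dec c0 c0); tauto.
  - intros e He. destruct (H (e / 2)) as [del [Hd Hh]]; [lra|].
    exists (Rmin del (1 - Cmod z)). split. apply Rmin_pos; lra.
    intros h Hhd. replace (h - c0)%C with h in Hhd by ring.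
    unfold psi. destruct (Ceq_dec c0 c0) as [_|C]; [|tauto].
    destruct (Ceq_dec h c0) as [Z|Z].
    + replace (d - d)%C with c0 by ring. rewrite Cmod_0; auto.
    + assert (Ph := proj1 (Cmod_gt_0 h) Z).
      replace ((f (z + h) - f z) / h - d)%C with ((f (z + h) - f z - d * h) / h)%C by (field; auto).
      rewrite Cmod_div by auto.
      assert (B : Cmod (f (z + h) - f z - d * h)%C <= e / 2 * Cmod h).
      { apply Hh. assert (T := Cmod_triangle z h). assert (Cmod h < 1 - Cmod z).
        eapply Rlt_le_trans; [exact Hhd|apply Rmin_r]. lra. eapply Rlt_le_trans; [exact Hhd|apply Rmin_l]. }
      apply Rle_lt_trans with (e / 2). apply Rmult_le_reg_r with (Cmod h); auto.
      unfold Rdiv at 1. rewrite Rmult_assoc, Rinv_l, Rmult_1_r by lra. auto. lra.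
Qed.

Lemma holo_deriv_of_cara f z d : cara f z d -> holo_deriv f z d.
Proof.
  intros [phi [E [P0 C]]] e He. destruct (C e He) as [del [Hd Hc]]. exists del. split; auto.
  intros h _ Hh. rewrite E. replace (f z + phi h * h - f z - d * h)%C with ((phi h - phi c0) * h)%C by (rewrite P0; ring).
  rewrite Cmod_mult. apply Rmult_le_compat_r. apply Cmod_ge_0. apply Rlt_le, Hc.
  replace (h - c0)%C with h by ring. auto.
Qed.

Lemma holo_disc_cdiff f : holo_disc f -> forall z, Cmod z < 1 -> cdiff f z.
Proof.
  intros H z Hz. destruct (H z Hz) as [d Hd]. apply (cdiff_of_holo_deriv f z d Hz).
  intros e He. destruct (Hd e He) as [del [Hdel Hh]]. exists del; split; auto.
Qed.

Lemma cdiff_holo_disc f : (forall z, Cmod z < 1 -> cdiff f z) -> holo_disc f.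
Proof.
  intros H z Hz. destruct (H z Hz) as [d Hd]. exists d. intros e He.
  destruct (holo_deriv_of_cara f z d Hd e He) as [del [Hdel Hh]]. exists del; split; auto.
Qed.

Lemma cara_increment_bound f z d : cara f z d -> exists del, 0 < del /\
  forall h, Cmod h < del -> Cmod (f (z + h) - f z)%C <= (Cmod d + 1) * Cmod h.
Proof.
  intros [phi [E [P0 C]]]. destruct (C 1 Rlt_0_1) as [del [Hd Hc]].
  exists del; split; auto. intros h Hh. rewrite E.
  replace (f z + phi h * h - f z)%C with (phi h * h)%C by ring.
  rewrite Cmod_mult. apply Rmult_le_compat_r; [apply Cmod_ge_0|].
  assert (T := Cmod_triangle (phi h - phi c0) (phi c0)).
  replace (phi h - phi c0 + phi c0)%C with (phi h) in T by ring.
  rewrite P0 in *. assert (Cmod (phi h - d)%C < 1) by (apply Hc; replace (h - c0)%C with h by ring; auto).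
  lra.
Qed.

Lemma holo_bidisc_at F (w : Cx * Cx) : holo_bidisc F -> inD2 w -> exists a b : Cx, forall eps, 0 < eps ->
  exists del, 0 < del /\ forall u : Cx * Cx, inD2 u ->
    Cmod (fst u - fst w)%C + Cmod (snd u - snd w)%C < del ->
    Cmod (F u - F w - (a * (fst u - fst w) + b * (snd u - snd w)))%C
      <= eps * (Cmod (fst u - fst w)%C + Cmod (snd u - snd w)%C).
Proof.
  intros HF Hw. destruct (HF w Hw) as [a [b Hab]]. exists a, b. intros eps He.
  destruct (Hab eps He) as [del [Hdel H]]. exists del. split; auto. intros u Hu Hd.
  assert (Eu : u = ((fst w + (fst u - fst w))%C, (snd w + (snd u - snd w))%C)).
  { destruct u. apply injective_projections; cbn [fst snd]; ring. }
  specialize (H ((fst u - fst w)%C, (snd u - snd w)%C)). cbn [fst snd] in H.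
  rewrite Eu at 1. apply H; [|exact Hd]. rewrite Eu in Hu. exact Hu.
Qed.

Lemma cdiff_holo_bidisc_comp (F : Cx * Cx -> Cx) (ps : Cx -> Cx * Cx) z :
  holo_bidisc F -> Cmod z < 1 ->
  (forall w, Cmod w < 1 -> inD2 (ps w)) ->
  cdiff (fun w => fst (ps w)) z -> cdiff (fun w => snd (ps w)) z ->
  cdiff (fun w => F (ps w)) z.
Proof.
  intros HF Hz Hps [d1 H1] [d2 H2].
  destruct (holo_bidisc_at F (ps z) HF (Hps z Hz)) as [a [b Hab]].
  apply (cdiff_of_holo_deriv _ z (a * d1 + b * d2)%C Hz).
  destruct (cara_increment_bound _ _ _ H1) as [del3 [Hd3 B1]].
  destruct (cara_increment_bound _ _ _ H2) as [del4 [Hd4 B2]].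
  apply holo_deriv_of_cara in H1. apply holo_deriv_of_cara in H2.
  intros e He.
  set (K := Cmod a + Cmod b + 1). set (L := Cmod d1 + Cmod d2 + 2).
  assert (PK : 0 < K) by (unfold K; generalize (Cmod_ge_0 a) (Cmod_ge_0 b); lra).
  assert (PL : 0 < L) by (unfold L; generalize (Cmod_ge_0 d1) (Cmod_ge_0 d2); lra).
  destruct (Hab (e / (2 * L))) as [dF [HdF HF']]. apply Rdiv_lt_0_compat; lra.
  destruct (H1 (e / (2 * K))) as [del1 [Hd1 G1]]. apply Rdiv_lt_0_compat; lra.
  destruct (H2 (e / (2 * K))) as [del2 [Hd2 G2]]. apply Rdiv_lt_0_compat; lra.
  set (del := Rmin (Rmin del1 del2) (Rmin (Rmin del3 del4) (dF / L))).
  assert (Pdel : 0 < del) by (unfold del; repeat apply Rmin_pos; auto; apply Rdiv_lt_0_compat; lra).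
  exists del. split; auto. intros h Hzh Hh.
  unfold del in Hh. apply Rmin_Rgt in Hh as [Hh12 Hh34]. apply Rmin_Rgt in Hh12 as [Hh1 Hh2].
  apply Rmin_Rgt in Hh34 as [Hh34 Hh5]. apply Rmin_Rgt in Hh34 as [Hh3 Hh4].
  specialize (G1 h Hzh Hh1). specialize (G2 h Hzh Hh2). specialize (B1 h Hh3). specialize (B2 h Hh4).
  set (D1 := (fst (ps (z + h)%C) - fst (ps z))%C) in *.
  set (D2 := (snd (ps (z + h)%C) - snd (ps z))%C) in *.
  assert (Ph := Cmod_ge_0 h).
  assert (SL : Cmod D1 + Cmod D2 <= L * Cmod h) by (unfold L; nra).
  assert (FF : Cmod (F (ps (z + h)%C) - F (ps z) - (a * D1 + b * D2))%C <= e / (2 * L) * (L * Cmod h)).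
  { eapply Rle_trans; [apply (HF' (ps (z + h)%C)); [apply Hps; auto|]|].
    - apply Rle_lt_trans with (L * Cmod h); auto.
      apply Rmult_lt_reg_r with (/ L). apply Rinv_0_lt_compat; auto.
      replace (L * Cmod h * / L) with (Cmod h) by (field; lra). auto.
    - apply Rmult_le_compat_l; auto. apply Rlt_le, Rdiv_lt_0_compat; lra. }
  replace (F (ps (z + h)%C) - F (ps z) - (a * d1 + b * d2) * h)%C
    with ((F (ps (z + h)%C) - F (ps z) - (a * D1 + b * D2)) + (a * (D1 - d1 * h) + b * (D2 - d2 * h)))%C by ring.
  eapply Rle_trans; [apply Cmod_triangle|].
  assert (T2 := Cmod_triangle (a * (D1 - d1 * h)) (b * (D2 - d2 * h))). rewrite !Cmod_mult in T2.
  assert (X2 : Cmod a * Cmod (D1 - d1 * h)%C + Cmod b * Cmod (D2 - d2 * h)%C <= K * (e / (2 * K) * Cmod h)).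
  { assert (0 <= e / (2 * K) * Cmod h) by (apply Rmult_le_pos; [apply Rlt_le, Rdiv_lt_0_compat|]; lra).
    apply Rle_trans with (Cmod a * (e / (2 * K) * Cmod h) + Cmod b * (e / (2 * K) * Cmod h)).
    - apply Rplus_le_compat; apply Rmult_le_compat_l; auto using Cmod_ge_0.
    - set (x := e / (2 * K) * Cmod h) in *. unfold K. nra. }
  replace (e / (2 * L) * (L * Cmod h)) with (e / 2 * Cmod h) in FF by (field; lra).
  replace (K * (e / (2 * K) * Cmod h)) with (e / 2 * Cmod h) in X2 by (field; lra).
  lra.
Qed.

Lemma mob_Cmod_mobius a b : mob a b = Cmod (mobius a b).
Proof.
  unfold mob, mobius. rewrite Defs_Cmod, Defs_Cdiv, Defs_Csub, Defs_Cmul, Defs_Cconj, Defs_C1.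
  replace ((b - a) / (c1 - Cconj a * b))%C with (- ((a - b) / (c1 - Cconj a * b)))%C
    by (unfold Cdiv; ring).
  rewrite Cmod_opp. reflexivity.
Qed.

(** * Extremal functions and extremal discs *)

Lemma c_candidate_le_l_candidate p q v w :
  p <> q -> c_candidates p q v -> l_candidates p q w -> v <= w.
Proof.
  intros Hpq [F [HF [HFm [Fp [Fq [Fo Ev]]]]]]
    [psi [l1 [l2 [[Hd1 [Hd2 Hpm]] [P0 [Hl1 [Hl2 [Pl1 [Pl2 Ew]]]]]]]]].
  unfold inD in Hl1, Hl2. rewrite Defs_Cmod in *. rewrite Defs_C0 in *. subst v w.
  set (G := fun z => F (psi z)).
  assert (Gd : forall z, Cmod z < 1 -> cdiff G z).
  { intros z Hz. apply cdiff_holo_bidisc_comp; auto; apply holo_disc_cdiff; auto. }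
  assert (Gb : forall z, Cmod z < 1 -> Cmod (G z) <= 1) by (intros z Hz; apply Rlt_le, HFm, Hpm, Hz).
  assert (Hl12 : l1 <> l2) by (intro E; subst l2; apply Hpq; rewrite <- Pl1, <- Pl2; auto).
  assert (S := schwarz_two_zeros G l1 l2 Gd Hl1 Hl2 Hl12).
  unfold G in S. rewrite Pl1, Pl2, P0 in S. specialize (S Fp Fq Gb).
  assert (PF := proj1 (Cmod_gt_0 _) Fo).
  assert (N1 : 0 < Cmod l1).
  { destruct (Req_dec (Cmod l1) 0) as [Z|Z]; [rewrite Z in S; lra|generalize (Cmod_ge_0 l1); lra]. }
  assert (N2 : 0 < Cmod l2).
  { destruct (Req_dec (Cmod l2) 0) as [Z|Z]; [rewrite Z in S; lra|generalize (Cmod_ge_0 l2); lra]. }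
  rewrite <- ln_mult by auto. apply ln_le; auto.
Qed.

Lemma inU_spec p1 p2 q1 q2 : inU (p1, p2) (q1, q2) ->
  Cmod p1 < 1 /\ Cmod q1 < 1 /\ p1 <> c0 /\ q1 <> c0 /\ p1 <> q1 /\
  Cmod (p2 / p1)%C < 1 /\ Cmod (q2 / q1)%C < 1 /\
  Cmod (mobius (p2 / p1) (q2 / q1))%C < Cmod (mobius p1 q1).
Proof.
  intros HU. unfold inU, inD2, inD in HU. cbn [fst snd] in HU.
  rewrite !mob_Cmod_mobius, Defs_Cdiv, Defs_Cmod in HU.
  destruct HU as [[Hp1 Hp2] [[Hq1 Hq2] [Hp [Hq Hm]]]].
  assert (Np1 : p1 <> c0) by (intro F; rewrite F, Cmod_0 in Hp; generalize (Cmod_ge_0 p2); lra).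
  assert (Nq1 : q1 <> c0) by (intro F; rewrite F, Cmod_0 in Hq; generalize (Cmod_ge_0 q2); lra).
  assert (Pp1 := proj1 (Cmod_gt_0 _) Np1). assert (Pq1 := proj1 (Cmod_gt_0 _) Nq1).
  repeat split; auto.
  - intro F. subst q1. rewrite mobius_self, Cmod_0 in Hm.
    generalize (Cmod_ge_0 (mobius (p2 / p1) (q2 / p1))). lra.
  - rewrite Cmod_div by auto. apply Rmult_lt_reg_r with (Cmod p1); auto.
    unfold Rdiv. rewrite Rmult_assoc, Rinv_l by lra. lra.
  - rewrite Cmod_div by auto. apply Rmult_lt_reg_r with (Cmod q1); auto.
    unfold Rdiv. rewrite Rmult_assoc, Rinv_l by lra. lra.
Qed.

Definition mobius_prod (p1 q1 : Cx) (w : Cx * Cx) : Cx := (mobius p1 (fst w) * mobius q1 (fst w))%C.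

Lemma mobius_prod_holo p1 q1 : Cmod p1 < 1 -> Cmod q1 < 1 -> holo_bidisc (mobius_prod p1 q1).
Proof.
  intros Hp Hq z [Hz1 Hz2].
  assert (Hz : Cmod (fst z) < 1) by exact Hz1.
  destruct (cdiff_mult (mobius p1) (mobius q1) (fst z)) as [d Hd].
  apply cdiff_mobius; apply mobius_denom_neq0; auto. apply cdiff_mobius; apply mobius_denom_neq0; auto.
  exists d, c0. intros e He. destruct (holo_deriv_of_cara _ _ _ Hd e He) as [del [Hdel Hh]].
  exists del. split; auto. intros h [Ih1 Ih2] Hh'.
  assert (Ph2 := Cmod_ge_0 (snd h)).
  unfold mobius_prod. cbn [fst snd].
  change (Cmod (mobius p1 (fst z + fst h) * mobius q1 (fst z + fst h) - mobius p1 (fst z) * mobius q1 (fst z) - (d * fst h + c0 * snd h))%C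
     <= e * (Cmod (fst h) + Cmod (snd h))).
  replace (d * fst h + c0 * snd h)%C with (d * fst h)%C by ring.
  change (Cmod (fst h) + Cmod (snd h) < del) in Hh'.
  eapply Rle_trans. apply Hh. exact Ih1. lra. apply Rmult_le_compat_l; lra.
Qed.

Lemma mobius_prod_maps p1 q1 : Cmod p1 < 1 -> Cmod q1 < 1 -> forall z, inD2 z -> inD (mobius_prod p1 q1 z).
Proof.
  intros Hp Hq z [Hz1 Hz2]. unfold inD, mobius_prod. change (Cmod (mobius p1 (fst z) * mobius q1 (fst z))%C < 1).
  rewrite Cmod_mult. assert (A := Cmod_mobius_lt_1 p1 (fst z) Hp Hz1). assert (B := Cmod_mobius_lt_1 q1 (fst z) Hq Hz1).
  generalize (Cmod_ge_0 (mobius p1 (fst z))) (Cmod_ge_0 (mobius q1 (fst z))). intros. nra.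
Qed.

Lemma mobius_prod_c_candidate p1 p2 q1 q2 : Cmod p1 < 1 -> Cmod q1 < 1 -> p1 <> c0 -> q1 <> c0 ->
  c_candidates (p1, p2) (q1, q2) (ln (Cmod p1 * Cmod q1)).
Proof.
  intros Hp1 Hq1 Np1 Nq1. exists (mobius_prod p1 q1).
  refine (conj (mobius_prod_holo p1 q1 Hp1 Hq1) (conj (mobius_prod_maps p1 q1 Hp1 Hq1) _)).
  unfold mobius_prod, origin2; cbn [fst snd]. rewrite Defs_C0, Defs_Cmod, !mobius_self, !mobius_0.
  replace (- p1 * - q1)%C with (p1 * q1)%C by ring.
  refine (conj (Cmult_0_l _) (conj (Cmult_0_r _) (conj (Cmult_neq_0 _ _ Np1 Nq1) _))).
  rewrite Cmod_mult. reflexivity.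
Qed.

Lemma graph_disc_l_candidate p q : inU p q ->
  l_candidates p q (ln (Cmod (fst p) * Cmod (fst q))).
Proof.
  destruct p as [p1 p2], q as [q1 q2]. intros HU. cbn [fst snd].
  destruct (inU_spec _ _ _ _ HU) as [Hp1 [Hq1 [Np1 [Nq1 [_ [Hw1 [Hw2 Hm]]]]]]].
  destruct (two_point_interpolation _ _ p1 q1 Hw1 Hw2 Hp1 Hq1 Hm) as [phi [Phd [Phm [Pha Phb]]]].
  exists (fun z => (z, (z * phi z)%C)), p1, q1.
  refine (conj (conj _ (conj _ _)) (conj _ (conj _ (conj _ (conj _ (conj _ _)))))).
  - apply cdiff_holo_disc. intros; apply cdiff_id.
  - apply cdiff_holo_disc. intros z Hz. apply cdiff_mult; auto. apply cdiff_id.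
  - intros z Hz. unfold inD in Hz. rewrite Defs_Cmod in Hz.
    split; unfold inD; rewrite Defs_Cmod; cbn [fst snd]; [exact Hz|].
    rewrite Cmod_mult. generalize (Cmod_ge_0 z) (Cmod_ge_0 (phi z)) (Phm z Hz). intros. nra.
  - unfold origin2. rewrite Defs_C0. replace (c0 * phi c0)%C with c0 by ring. reflexivity.
  - exact Hp1.
  - exact Hq1.
  - assert (E : (p1 * (p2 / p1))%C = p2) by (field; auto). rewrite Pha, E. reflexivity.
  - assert (E : (q1 * (q2 / q1))%C = q2) by (field; auto). rewrite Phb, E. reflexivity.
  - rewrite Defs_Cmod, ln_mult; auto; apply Cmod_gt_0; auto.
Qed.

Lemma c_l_on_U p q : inU p q -> p <> q ->
  c_is p q (ln (Cmod (fst p) * Cmod (fst q))) /\ l_is p q (ln (Cmod (fst p) * Cmod (fst q))).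
Proof.
  intros HU Hpq.
  assert (Hl := graph_disc_l_candidate p q HU).
  assert (Hc : c_candidates p q (ln (Cmod (fst p) * Cmod (fst q)))).
  { destruct p as [p1 p2], q as [q1 q2].
    destruct (inU_spec _ _ _ _ HU) as [Hp1 [Hq1 [Np1 [Nq1 _]]]].
    apply mobius_prod_c_candidate; auto. }
  split; split.
  - intros v Hv. exact (c_candidate_le_l_candidate p q _ _ Hpq Hv Hl).
  - intros b Hb. apply Hb, Hc.
  - intros w Hw. exact (c_candidate_le_l_candidate p q _ _ Hpq Hc Hw).
  - intros b Hb. apply Hb, Hl.
Qed.

(** * Symmetry in the coordinates *)

Lemma swap_swap (p : Cx * Cx) : swap (swap p) = p.
Proof. destruct p; reflexivity. Qed.

Lemma inD2_swap z : inD2 z -> inD2 (swap z).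
Proof. intros [A B]. split; auto. Qed.

Lemma c_candidates_swap p q v : c_candidates p q v -> c_candidates (swap p) (swap q) v.
Proof.
  intros [F [HF [HFm [Fp [Fq [Fo Ev]]]]]].
  exists (fun w => F (swap w)). refine (conj _ (conj _ (conj _ (conj _ (conj _ _))))).
  - intros z Hz. destruct (HF (swap z) (inD2_swap z Hz)) as [a [b Hab]].
    exists b, a. intros e He. destruct (Hab e He) as [d [Hd H]]. exists d. split; auto.
    intros h Hh1 Hh2.
    assert (X := H (snd h, fst h)). unfold swap in *. cbn [fst snd] in *.
    rewrite Defs_Csub, Defs_Cadd, Defs_Cmul, Defs_Cmod in *.
    replace (b * fst h + a * snd h)%C with (a * snd h + b * fst h)%C by ring.
    rewrite (Rplus_comm (Cmod (fst h))). apply X.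
    destruct Hh1 as [A B]. split; auto. lra.
  - intros z Hz. apply HFm. apply inD2_swap. auto.
  - rewrite swap_swap. auto.
  - rewrite swap_swap. auto.
  - exact Fo.
  - exact Ev.
Qed.

Lemma l_candidates_swap p q v : l_candidates p q v -> l_candidates (swap p) (swap q) v.
Proof.
  intros [psi [l1 [l2 [[Hd1 [Hd2 Hpm]] [P0 [Hl1 [Hl2 [Pl1 [Pl2 Ev]]]]]]]]].
  exists (fun z => swap (psi z)), l1, l2.
  refine (conj (conj _ (conj _ _)) (conj _ (conj Hl1 (conj Hl2 (conj _ (conj _ Ev)))))).
  - exact Hd2.
  - exact Hd1.
  - intros z Hz. apply inD2_swap. auto.
  - rewrite P0. reflexivity.
  - rewrite Pl1. reflexivity.
  - rewrite Pl2. reflexivity.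
Qed.

Lemma c_is_swap p q v : c_is (swap p) (swap q) v -> c_is p q v.
Proof.
  intros [U L]. split.
  - intros x Hx. apply U. apply c_candidates_swap. auto.
  - intros b Hb. apply L. intros x Hx. apply Hb. apply c_candidates_swap in Hx. rewrite !swap_swap in Hx. auto.
Qed.

Lemma l_is_swap p q v : l_is (swap p) (swap q) v -> l_is p q v.
Proof.
  intros [U L]. split.
  - intros x Hx. apply U. apply l_candidates_swap. auto.
  - intros b Hb. apply L. intros x Hx. apply Hb. apply l_candidates_swap in Hx. rewrite !swap_swap in Hx. auto.
Qed.

Import Pilot.Defs.

Theorem mainTheorem5 :
  forall p q : Cplx * Cplx,
    (inU p q \/ inU (swap p) (swap q)) -> p <> q ->
    exists v : R, c_is p q v /\ l_is p q v /\
      (inU p q -> v = ln (Cmod (fst p) * Cmod (fst q))).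
Proof.
  intros p q [HU|HU] Hpq.
  - destruct (c_l_on_U p q HU Hpq) as [Hc Hl]. eauto.
  - assert (Hs : swap p <> swap q).
    { intro F. apply Hpq. rewrite <- (swap_swap p), <- (swap_swap q), F. auto. }
    destruct (c_l_on_U _ _ HU Hs) as [Hc Hl].
    exists (ln (Cmod (fst (swap p)) * Cmod (fst (swap q)))).
    split; [apply c_is_swap, Hc|split; [apply l_is_swap, Hl|]].
    (* U and sigma(U) are disjoint *)
    intros HU'. exfalso. destruct p as [p1 p2], q as [q1 q2].
    destruct HU as [_ [_ [A _]]]. destruct HU' as [_ [_ [B _]]]. simpl in A, B. lra.
Qed.
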